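(* Let $H$ be a complex infinite-dimensional separable Hilbert space and let $(f_n)_{n=1}^\infty$ be a frame for $H$ with optimal upper frame bound $B$ and analysis operator $U$, such that its excess $e((f_n)_{n=1}^\infty)$ is finite and $\dim\operatorname{Im}(B\cdot I-U^*U)<\infty$. Then $\sum_{n=1}^\infty(B-\|f_n\|^2)<\infty$.
   Context: The analysis operator is $U:H\to\ell^2$, $Ux=(\langle x,f_n\rangle)_n$. The optimal upper frame bound is the infimum of all $B$ with $\sum_n|\langle x,f_n\rangle|^2\le B\|x\|^2$ for all $x$. The excess of a frame is the maximal number of elements that can be deleted so that the remaining sequence is still a frame for $H$. *)

From Stdlib Require Import Reals List.
Open Scope R_scope.

Record C := mkC { Cre : R ; Cim : R }.
Definition C0 : C := mkC 0 0.
Definition C1 : C := mkC 1 0.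
Definition Cadd (a b : C) : C := mkC (Cre a + Cre b) (Cim a + Cim b).
Definition Cmul (a b : C) : C :=
  mkC (Cre a * Cre b - Cim a * Cim b) (Cre a * Cim b + Cim a * Cre b).
Definition Cconj (a : C) : C := mkC (Cre a) (- Cim a).
Definition RtoC (r : R) : C := mkC r 0.
Definition Cmod2 (a : C) : R := Cre a * Cre a + Cim a * Cim a.

Record CHilbert := {
  vec :> Type;
  vzero : vec;
  vadd : vec -> vec -> vec;
  vopp : vec -> vec;
  vscal : C -> vec -> vec;
  inner : vec -> vec -> C;   (* linear in the first argument *)
  vadd_assoc : forall x y z, vadd x (vadd y z) = vadd (vadd x y) z;
  vadd_comm : forall x y, vadd x y = vadd y x;
  vadd_zero : forall x, vadd vzero x = x;
  vadd_opp : forall x, vadd x (vopp x) = vzero;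
  vscal_assoc : forall a b x, vscal a (vscal b x) = vscal (Cmul a b) x;
  vscal_one : forall x, vscal C1 x = x;
  vscal_distr_v : forall a x y, vscal a (vadd x y) = vadd (vscal a x) (vscal a y);
  vscal_distr_c : forall a b x, vscal (Cadd a b) x = vadd (vscal a x) (vscal b x);
  inner_add_l : forall x y z, inner (vadd x y) z = Cadd (inner x z) (inner y z);
  inner_scal_l : forall a x z, inner (vscal a x) z = Cmul a (inner x z);
  inner_conj_sym : forall x y, inner y x = Cconj (inner x y);
  inner_pos : forall x, 0 <= Cre (inner x x);
  inner_def : forall x, inner x x = C0 -> x = vzero;
  complete : forall u : nat -> vec,
    (forall eps, eps > 0 -> exists N, forall m n, (m >= N)%nat -> (n >= N)%nat ->
        sqrt (Cre (inner (vadd (u m) (vopp (u n))) (vadd (u m) (vopp (u n))))) < eps) ->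
    exists l, forall eps, eps > 0 -> exists N, forall n, (n >= N)%nat ->
        sqrt (Cre (inner (vadd (u n) (vopp l)) (vadd (u n) (vopp l)))) < eps
}.

Arguments vzero {_}. Arguments vadd {_}. Arguments vopp {_}.
Arguments vscal {_}. Arguments inner {_}.

Section H.
Variable H : CHilbert.

Definition vsub (x y : H) : H := vadd x (vopp y).
Definition vnorm (x : H) : R := sqrt (Cre (inner x x)).

Fixpoint in_span (l : list H) (x : H) : Prop :=
  match l with
  | nil => x = vzero
  | v :: l' => exists (c : C) (y : H), in_span l' y /\ x = vadd (vscal c v) y
  end.

Definition separable : Prop :=
  exists d : nat -> H, forall x eps, eps > 0 -> exists n, vnorm (vsub x (d n)) < eps.

Definition infinite_dimensional : Prop :=
  ~ exists l : list H, forall x, in_span l x.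

(* Subfamilies (f_n)_{n in P} are described by a boolean predicate P on
   the index set. The Bessel-type sum sum_{n in P} |<x,f_n>|^2. *)
Definition frame_terms (P : nat -> bool) (f : nat -> H) (x : H) (n : nat) : R :=
  if P n then Cmod2 (inner x (f n)) else 0.

Definition is_frame_on (P : nat -> bool) (f : nat -> H) : Prop :=
  exists A B, 0 < A /\ 0 < B /\
    forall x, exists s, infinite_sum (frame_terms P f x) s /\
       A * vnorm x ^ 2 <= s /\ s <= B * vnorm x ^ 2.

Definition is_frame (f : nat -> H) : Prop := is_frame_on (fun _ => true) f.

Definition upper_frame_bound (f : nat -> H) (B : R) : Prop :=
  forall x, exists s, infinite_sum (frame_terms (fun _ => true) f x) s /\
     s <= B * vnorm x ^ 2.

Definition optimal_upper_frame_bound (f : nat -> H) (B : R) : Prop :=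
  (forall B', upper_frame_bound f B' -> B <= B') /\
  (forall m, (forall B', upper_frame_bound f B' -> m <= B') -> m <= B).

Fixpoint frame_psum (f : nat -> H) (x : H) (N : nat) : H :=
  match N with
  | O => vscal (inner x (f O)) (f O)
  | S N' => vadd (frame_psum f x N') (vscal (inner x (f N)) (f N))
  end.

(* U^*U x = y, where U x = (<x,f_n>)_n is the analysis operator:
   U^*U x = sum_n <x,f_n> f_n (norm-convergent series) *)
Definition frame_op_at (f : nat -> H) (x y : H) : Prop :=
  forall eps, eps > 0 -> exists N, forall n, (n >= N)%nat ->
     vnorm (vsub (frame_psum f x n) y) < eps.

Definition finite_dim_range_BI_minus_frame_op (f : nat -> H) (B : R) : Prop :=
  exists l : list H, forall x y, frame_op_at f x y ->
     in_span l (vsub (vscal (RtoC B) x) y).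

Definition card_le (S : nat -> bool) (N : nat) : Prop :=
  forall l : list nat, NoDup l -> (forall n, In n l -> S n = true) ->
    (length l <= N)%nat.

Definition deletable (f : nat -> H) (S : nat -> bool) : Prop :=
  is_frame_on (fun n => negb (S n)) f.

(* the excess e(f) = sup { |S| : S deletable } is finite *)
Definition finite_excess (f : nat -> H) : Prop :=
  exists N : nat, forall S, deletable f S -> card_le S N.

End H.

(* Let S be the frame operator.  Since B I - S has finite rank, S equals B on the orthogonal
   complement of a finite-dimensional space V = span l and maps V to itself, which gives an
   explicit formula for the form <S^-1 x, y>.  Fix M and let T be the synthesis operator of
   f_0, ..., f_M.  Then D = I - T* S^-1 T is a positive contraction on C^(M+1), so
   tr D <= rank D.  Gram–Schmidt for D applied to the coordinate vectors picks rank D indices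
   whose coordinates D controls; by Cauchy–Schwarz between S and S^-1 the corresponding frame
   vectors can be deleted, so rank D is at most the excess.  Finally the n-th diagonal entry of
   D is 1 - <S^-1 f_n, f_n> >= 1 - |f_n|^2 / B - (the part of f_n seen by V), and these last
   parts sum to at most dim V.  Hence the partial sums of B - |f_n|^2 are bounded. *)

From Pilot Require Import Defs.
From Stdlib Require Import Reals List Lra Lia Psatz Classical ClassicalEpsilon FunctionalExtensionality.
(* Re-imported so that [C] is the complex numbers, not Stdlib's binomial coefficient. *)
Import Pilot.Defs.
Open Scope R_scope.

Lemma C_ext (a b : C) : Cre a = Cre b -> Cim a = Cim b -> a = b.
Proof. destruct a, b; simpl; intros; subst; reflexivity. Qed.

Ltac C_ring := apply C_ext; simpl; ring.

Definition Copp (a : C) : C := mkC (- Cre a) (- Cim a).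
Definition Cneg1 : C := mkC (-1) 0.

Lemma Cconj_involutive (a : C) : Cconj (Cconj a) = a.
Proof. C_ring. Qed.

Lemma Cmod2_ge0 (a : C) : 0 <= Cmod2 a.
Proof. unfold Cmod2; nra. Qed.

Lemma Cmod2_conj (a : C) : Cmod2 (Cconj a) = Cmod2 a.
Proof. unfold Cmod2, Cconj; simpl; ring. Qed.

Lemma Cmod2_mul (a b : C) : Cmod2 (Cmul a b) = Cmod2 a * Cmod2 b.
Proof. unfold Cmod2, Cmul; simpl; ring. Qed.

Lemma Cre_sq_le_Cmod2 (a : C) : Cre a * Cre a <= Cmod2 a.
Proof. unfold Cmod2; nra. Qed.

Definition Cabs (a : C) : R := sqrt (Cmod2 a).

Lemma Cabs_ge0 (a : C) : 0 <= Cabs a.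
Proof. apply sqrt_pos. Qed.

Lemma Cabs_sq (a : C) : Cabs a * Cabs a = Cmod2 a.
Proof. apply sqrt_sqrt, Cmod2_ge0. Qed.

Lemma Cabs_mul (a b : C) : Cabs (Cmul a b) = Cabs a * Cabs b.
Proof. unfold Cabs. rewrite Cmod2_mul. apply sqrt_mult; apply Cmod2_ge0. Qed.

Lemma Cabs_add_le (a b : C) : Cabs (Cadd a b) <= Cabs a + Cabs b.
Proof.
  pose proof (Cabs_ge0 a). pose proof (Cabs_ge0 b).
  apply Rsqr_incr_0_var; [|lra]. unfold Rsqr. rewrite Cabs_sq.
  assert (Hdot : Cre a * Cre b + Cim a * Cim b <= Cabs a * Cabs b).
  { rewrite <- Cabs_mul.
    destruct (Rle_dec (Cre a * Cre b + Cim a * Cim b) 0) as [Hneg|Hpos];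
      [pose proof (Cabs_ge0 (Cmul a b)); lra|].
    rewrite <- (sqrt_square (Cre a * Cre b + Cim a * Cim b)) by lra.
    apply sqrt_le_1; [nra | apply Cmod2_ge0 |].
    assert (E : Cmod2 (Cmul a b) = (Cre a * Cre b + Cim a * Cim b) * (Cre a * Cre b + Cim a * Cim b)
      + (Cre a * Cim b - Cim a * Cre b) * (Cre a * Cim b - Cim a * Cre b)) by (unfold Cmod2; simpl; ring).
    rewrite E. pose proof (Rle_0_sqr (Cre a * Cim b - Cim a * Cre b)). unfold Rsqr in *. lra. }
  pose proof (Cabs_sq a). pose proof (Cabs_sq b).
  unfold Cmod2 in *; simpl in *. nra.
Qed.

Fixpoint Clsum {T} (g : T -> C) (W : list T) : C :=
  match W with nil => C0 | w :: W' => Cadd (g w) (Clsum g W') end.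

Fixpoint Rlsum {T} (g : T -> R) (W : list T) : R :=
  match W with nil => 0 | w :: W' => g w + Rlsum g W' end.

Section ListSums.
Variable T : Type.
Implicit Types (W : list T) (g : T -> C) (u v : T -> R).

Lemma Clsum_ext g1 g2 W : (forall w, In w W -> g1 w = g2 w) -> Clsum g1 W = Clsum g2 W.
Proof. induction W; simpl; intros E; auto. rewrite E, IHW by auto. reflexivity. Qed.

Lemma Clsum_zero g W : (forall w, In w W -> g w = C0) -> Clsum g W = C0.
Proof. induction W; simpl; intros E; auto. rewrite E, IHW by auto. C_ring. Qed.

Lemma Clsum_add g1 g2 W :
  Clsum (fun w => Cadd (g1 w) (g2 w)) W = Cadd (Clsum g1 W) (Clsum g2 W).
Proof. induction W; simpl; [C_ring|]. rewrite IHW. C_ring. Qed.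

Lemma Clsum_scal a g W : Clsum (fun w => Cmul a (g w)) W = Cmul a (Clsum g W).
Proof. induction W; simpl; [C_ring|]. rewrite IHW. C_ring. Qed.

Lemma Clsum_conj g W : Clsum (fun w => Cconj (g w)) W = Cconj (Clsum g W).
Proof. induction W; simpl; [C_ring|]. rewrite IHW. C_ring. Qed.

Lemma Rlsum_ext u v W : (forall w, In w W -> u w = v w) -> Rlsum u W = Rlsum v W.
Proof. induction W; simpl; intros E; auto. rewrite E, IHW; auto. Qed.

Lemma Rlsum_le u v W : (forall w, u w <= v w) -> Rlsum u W <= Rlsum v W.
Proof. intros E; induction W as [|a W IH]; simpl; [lra|]. specialize (E a). lra. Qed.

Lemma Rlsum_ge0 u W : (forall w, 0 <= u w) -> 0 <= Rlsum u W.
Proof. intros E; induction W as [|a W IH]; simpl; [lra|]. specialize (E a). lra. Qed.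

Lemma Rlsum_const_1 W : Rlsum (fun _ => 1) W = INR (length W).
Proof. induction W; simpl; auto. rewrite IHW. destruct (length W); simpl; lra. Qed.

Lemma Cabs_Clsum_le g W : Cabs (Clsum g W) <= Rlsum (fun w => Cabs (g w)) W.
Proof.
  induction W; simpl.
  - unfold Cabs, Cmod2; simpl. rewrite Rmult_0_l, Rplus_0_l, sqrt_0. lra.
  - eapply Rle_trans; [apply Cabs_add_le | lra].
Qed.

Lemma cauchy_schwarz_cons x y S P Q : 0 <= P -> 0 <= Q -> S * S <= P * Q ->
  (x * y + S) * (x * y + S) <= (x * x + P) * (y * y + Q).
Proof.
  intros HP HQ HS.
  set (s := x * x * Q + y * y * P). set (t := 2 * x * y * S).
  assert (Hs : 0 <= s).
  { unfold s. pose proof (Rle_0_sqr x). pose proof (Rle_0_sqr y). unfold Rsqr in *.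
    assert (0 <= x * x * Q) by (apply Rmult_le_pos; auto).
    assert (0 <= y * y * P) by (apply Rmult_le_pos; auto). lra. }
  assert (Hts : t <= s).
  { apply Rsqr_incr_0_var; auto. unfold Rsqr.
    assert (E : s * s - t * t = (x * x * Q - y * y * P) * (x * x * Q - y * y * P)
                  + 4 * ((x * x) * (y * y) * (P * Q - S * S))) by (unfold s, t; ring).
    assert (0 <= (x * x) * (y * y) * (P * Q - S * S))
      by (apply Rmult_le_pos; [apply Rmult_le_pos; apply Rle_0_sqr | lra]).
    pose proof (Rle_0_sqr (x * x * Q - y * y * P)). unfold Rsqr in *. lra. }
  assert (E : (x * x + P) * (y * y + Q) - (x * y + S) * (x * y + S) = (s - t) + (P * Q - S * S))
    by (unfold s, t; ring).
  lra.
Qed.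

Lemma Rlsum_cauchy_schwarz u v W :
  Rlsum (fun w => u w * v w) W * Rlsum (fun w => u w * v w) W <=
  Rlsum (fun w => u w * u w) W * Rlsum (fun w => v w * v w) W.
Proof.
  induction W; simpl; [lra|].
  apply cauchy_schwarz_cons; auto; apply Rlsum_ge0; intros; nra.
Qed.

Lemma Clsum_cauchy_schwarz (a b : T -> C) W :
  Cmod2 (Clsum (fun w => Cmul (a w) (b w)) W) <=
  Rlsum (fun w => Cmod2 (a w)) W * Rlsum (fun w => Cmod2 (b w)) W.
Proof.
  rewrite <- Cabs_sq.
  pose proof (Cabs_Clsum_le (fun w => Cmul (a w) (b w)) W) as Htri.
  eapply Rle_trans; [apply Rmult_le_compat; eauto; apply Cabs_ge0|].
  rewrite (Rlsum_ext _ (fun w => Cabs (a w) * Cabs (b w))) by (intros; apply Cabs_mul).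
  rewrite (Rlsum_ext (fun w => Cmod2 (a w)) (fun w => Cabs (a w) * Cabs (a w)))
    by (intros; symmetry; apply Cabs_sq).
  rewrite (Rlsum_ext (fun w => Cmod2 (b w)) (fun w => Cabs (b w) * Cabs (b w)))
    by (intros; symmetry; apply Cabs_sq).
  apply Rlsum_cauchy_schwarz.
Qed.

End ListSums.

(** * Complex vector spaces with a positive semidefinite Hermitian form *)

Record CVSpace := {
  cv :> Type;
  cz : cv;
  cad : cv -> cv -> cv;
  csc : C -> cv -> cv;
  cad_assoc : forall x y z, cad x (cad y z) = cad (cad x y) z;
  cad_comm : forall x y, cad x y = cad y x;
  cad_zero_l : forall x, cad cz x = x;
  csc_assoc : forall a b x, csc a (csc b x) = csc (Cmul a b) x;
  csc_one : forall x, csc C1 x = x;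
  csc_distr_v : forall a x y, csc a (cad x y) = cad (csc a x) (csc a y);
  csc_distr_c : forall a b x, csc (Cadd a b) x = cad (csc a x) (csc b x);
  csc_zero_l : forall x, csc C0 x = cz }.

Arguments cz {_}. Arguments cad {_}. Arguments csc {_}.

Record HForm (X : CVSpace) := {
  hf :> X -> X -> C;
  hf_add_l : forall x y z, hf (cad x y) z = Cadd (hf x z) (hf y z);
  hf_scal_l : forall a x z, hf (csc a x) z = Cmul a (hf x z);
  hf_sym : forall x y, hf y x = Cconj (hf x y);
  hf_pos : forall x, 0 <= Cre (hf x x) }.

Arguments hf_add_l {X} h. Arguments hf_scal_l {X} h.
Arguments hf_sym {X} h. Arguments hf_pos {X} h.

Section VectorSpace.
Variable X : CVSpace.
Implicit Types (x y z : X) (L W : list X).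

Definition csub x y : X := cad x (csc Cneg1 y).

Lemma csc_zero_r a : csc a (@cz X) = cz.
Proof.
  rewrite <- (csc_zero_l X cz), csc_assoc.
  replace (Cmul a C0) with C0 by C_ring. reflexivity.
Qed.

Lemma cad_zero_r x : cad x cz = x.
Proof. rewrite cad_comm; apply cad_zero_l. Qed.

Lemma csubK x y : cad (csub x y) y = x.
Proof.
  unfold csub. rewrite <- cad_assoc.
  rewrite <- (csc_one X y) at 2. rewrite <- csc_distr_c.
  replace (Cadd Cneg1 C1) with C0 by C_ring. rewrite csc_zero_l. apply cad_zero_r.
Qed.

Lemma csub_eq0 x y : csub x y = cz -> x = y.
Proof. intro E. rewrite <- (csubK x y), E. apply cad_zero_l. Qed.

Lemma csubvv x : csub x x = cz.
Proof.
  unfold csub. rewrite <- (csc_one X x) at 1. rewrite <- csc_distr_c.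
  replace (Cadd C1 Cneg1) with C0 by C_ring. apply csc_zero_l.
Qed.

Lemma csub_swap x y : csub y x = csc Cneg1 (csub x y).
Proof.
  unfold csub. rewrite csc_distr_v, csc_assoc.
  replace (Cmul Cneg1 Cneg1) with C1 by C_ring. rewrite csc_one. apply cad_comm.
Qed.

Fixpoint lin_comb (a : X -> C) W : X :=
  match W with nil => cz | w :: W' => cad (csc (a w) w) (lin_comb a W') end.

Lemma lin_comb_ext a1 a2 W : (forall w, In w W -> a1 w = a2 w) -> lin_comb a1 W = lin_comb a2 W.
Proof. induction W; simpl; intros E; auto. rewrite E, IHW by auto. reflexivity. Qed.

Fixpoint span L x : Prop :=
  match L with
  | nil => x = cz
  | v :: L' => exists c y, span L' y /\ x = cad (csc c v) y
  end.

Lemma span_zero L : span L cz.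
Proof.
  induction L; simpl; auto. exists C0, cz. split; auto. rewrite csc_zero_l, cad_zero_l. auto.
Qed.

Lemma span_add L x y : span L x -> span L y -> span L (cad x y).
Proof.
  revert x y; induction L as [|v L IH]; simpl; intros x y Hx Hy.
  - subst. apply cad_zero_l.
  - destruct Hx as [c [x' [Hx' ->]]]. destruct Hy as [d [y' [Hy' ->]]].
    exists (Cadd c d), (cad x' y'). split; auto.
    rewrite csc_distr_c, <- !cad_assoc. f_equal.
    rewrite (cad_comm _ x' (cad (csc d v) y')), <- cad_assoc. f_equal. apply cad_comm.
Qed.

Lemma span_scal L a x : span L x -> span L (csc a x).
Proof.
  revert x; induction L as [|v L IH]; simpl; intros x Hx.
  - subst. apply csc_zero_r.
  - destruct Hx as [c [x' [Hx' ->]]]. exists (Cmul a c), (csc a x').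
    split; auto. rewrite csc_distr_v, csc_assoc. auto.
Qed.

Lemma span_sub L x y : span L x -> span L y -> span L (csub x y).
Proof. intros. apply span_add; auto. apply span_scal; auto. Qed.

Lemma span_cons L v x : span L x -> span (v :: L) x.
Proof. intros. exists C0, x. split; auto. rewrite csc_zero_l, cad_zero_l. auto. Qed.

Lemma span_in L v : In v L -> span L v.
Proof.
  induction L as [|t L IH]; simpl; [tauto|]. intros [<-|Hv].
  - exists C1, cz. split; [apply span_zero|]. rewrite csc_one, cad_zero_r. auto.
  - apply span_cons; auto.
Qed.

Lemma span_lin_comb L a W : (forall w, In w W -> span L w) -> span L (lin_comb a W).
Proof.
  induction W; simpl; intros. apply span_zero.
  apply span_add; auto. apply span_scal; auto.
Qed.

Lemma span_trans L1 L2 x : span L1 x -> (forall v, In v L1 -> span L2 v) -> span L2 x.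
Proof.
  revert x; induction L1 as [|v L1 IH]; simpl; intros x Hx H12.
  - subst. apply span_zero.
  - destruct Hx as [c [y [Hy ->]]]. apply span_add; auto. apply span_scal; auto.
Qed.

Section Form.
Variable h : HForm X.

Lemma hf_zero_l z : h cz z = C0.
Proof. rewrite <- (csc_zero_l X cz), hf_scal_l. C_ring. Qed.

Lemma hf_add_r z x y : h z (cad x y) = Cadd (h z x) (h z y).
Proof. rewrite hf_sym, hf_add_l, (hf_sym h x z), (hf_sym h y z). C_ring. Qed.

Lemma hf_scal_r a z x : h z (csc a x) = Cmul (Cconj a) (h z x).
Proof. rewrite hf_sym, hf_scal_l, (hf_sym h x z). C_ring. Qed.

Lemma hf_sub_l x y z : h (csub x y) z = Cadd (h x z) (Copp (h y z)).
Proof. unfold csub. rewrite hf_add_l, hf_scal_l. C_ring. Qed.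

Lemma hf_sub_r z x y : h z (csub x y) = Cadd (h z x) (Copp (h z y)).
Proof. unfold csub. rewrite hf_add_r, hf_scal_r. C_ring. Qed.

Lemma hf_self_im x : Cim (h x x) = 0.
Proof. pose proof (f_equal Cim (hf_sym h x x)) as E. simpl in E. lra. Qed.

Lemma hf_self_real x : h x x = RtoC (Cre (h x x)).
Proof. apply C_ext; simpl; [reflexivity | apply hf_self_im]. Qed.

Lemma hf_scal_self c x : Cre (h (csc c x) (csc c x)) = Cmod2 c * Cre (h x x).
Proof.
  rewrite hf_scal_l, hf_scal_r. pose proof (hf_self_im x) as Him.
  unfold Cmod2; simpl. rewrite Him. ring.
Qed.

Lemma hf_sub_sym x y : Cre (h (csub x y) (csub x y)) = Cre (h (csub y x) (csub y x)).
Proof. rewrite (csub_swap x y), hf_scal_self. unfold Cmod2; simpl. ring. Qed.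

Lemma hf_expand x y c :
  Cre (h (cad x (csc c y)) (cad x (csc c y))) =
  Cre (h x x) + 2 * (Cre c * Cre (h x y) + Cim c * Cim (h x y)) + Cmod2 c * Cre (h y y).
Proof.
  rewrite hf_add_l, !hf_add_r, !hf_scal_l, !hf_scal_r, (hf_sym h x y).
  pose proof (hf_self_im y) as Him. unfold Cmod2; simpl. rewrite Him. ring.
Qed.

Lemma hf_cauchy_schwarz x y : Cmod2 (h x y) <= Cre (h x x) * Cre (h y y).
Proof.
  set (c := h x y). set (A := Cre (h x x)). set (D := Cre (h y y)).
  assert (HA : 0 <= A) by apply hf_pos. assert (HD : 0 <= D) by apply hf_pos.
  (* positivity of h (x - t c y) for every real t *)
  assert (key : forall t, 0 <= A - 2 * t * Cmod2 c + t * t * Cmod2 c * D).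
  { intro t. pose proof (hf_pos h (cad x (csc (mkC (- t * Cre c) (- t * Cim c)) y))) as P.
    rewrite hf_expand in P. fold c A D in P. unfold Cmod2 in *; simpl in P. nra. }
  pose proof (Cmod2_ge0 c) as Hc.
  destruct (Req_dec D 0) as [HD0|HD0].
  - destruct (Req_dec (Cmod2 c) 0) as [Hc0|Hc0]; [rewrite Hc0; nra|].
    specialize (key ((A + 1) / (2 * Cmod2 c))). rewrite HD0 in key.
    assert (2 * ((A + 1) / (2 * Cmod2 c)) * Cmod2 c = A + 1) by (field; auto).
    nra.
  - specialize (key (/ D)).
    assert (E : A - 2 * / D * Cmod2 c + / D * / D * Cmod2 c * D = A - Cmod2 c / D)
      by (field; lra).
    rewrite E in key.
    apply (Rmult_le_compat_r D) in key; [|lra].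
    unfold Rdiv in key. rewrite Rmult_minus_distr_r, Rmult_assoc, Rinv_l in key by lra. lra.
Qed.

Lemma hf_triangle x y :
  sqrt (Cre (h (cad x y) (cad x y))) <= sqrt (Cre (h x x)) + sqrt (Cre (h y y)).
Proof.
  pose proof (hf_expand x y C1) as E. rewrite csc_one in E.
  unfold Cmod2 in E; simpl in E.
  pose proof (hf_cauchy_schwarz x y) as Hcs. pose proof (hf_pos h x). pose proof (hf_pos h y).
  set (A := Cre (h x x)) in *. set (D := Cre (h y y)) in *.
  assert (Hr : Cre (h x y) <= sqrt A * sqrt D).
  { rewrite <- sqrt_mult by lra. apply Rsqr_incr_0_var; [|apply sqrt_pos].
    rewrite Rsqr_sqrt by nra. unfold Rsqr, Cmod2 in *. nra. }
  pose proof (sqrt_pos A). pose proof (sqrt_pos D).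
  apply Rsqr_incr_0_var; [|nra]. rewrite Rsqr_sqrt by apply hf_pos.
  unfold Rsqr. rewrite E. pose proof (sqrt_sqrt A). pose proof (sqrt_sqrt D). nra.
Qed.

Lemma hf_lin_comb_l a W y : h (lin_comb a W) y = Clsum (fun w => Cmul (a w) (h w y)) W.
Proof.
  induction W; simpl; [apply hf_zero_l|]. rewrite hf_add_l, hf_scal_l, IHW. reflexivity.
Qed.

Lemma hf_span_orth L x t : span L x -> (forall w, In w L -> h w t = C0) -> h x t = C0.
Proof.
  revert x; induction L as [|v L IH]; simpl; intros x Hx Hort.
  - subst. apply hf_zero_l.
  - destruct Hx as [c [y [Hy ->]]]. rewrite hf_add_l, hf_scal_l, Hort, IH; auto. C_ring.
Qed.

Lemma hf_lin_comb_norm_le a W :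
  sqrt (Cre (h (lin_comb a W) (lin_comb a W))) <= Rlsum (fun w => Cabs (a w) * sqrt (Cre (h w w))) W.
Proof.
  induction W as [|w W IH]; simpl.
  - rewrite hf_zero_l. simpl. rewrite sqrt_0. lra.
  - eapply Rle_trans; [apply hf_triangle|]. rewrite hf_scal_self, sqrt_mult by (apply Cmod2_ge0 || apply hf_pos).
    unfold Cabs in *. lra.
Qed.

Fixpoint orthonormal W : Prop :=
  match W with
  | nil => True
  | w :: W' => h w w = C1 /\ (forall t, In t W' -> h w t = C0) /\ orthonormal W'
  end.

Lemma orthonormal_trace W : orthonormal W -> Rlsum (fun w => Cre (h w w)) W = INR (length W).
Proof.
  intros HW. rewrite <- Rlsum_const_1. induction W as [|t W IH]; simpl; auto.
  destruct HW as [Ht [_ HW]]. rewrite Ht, IH by auto. reflexivity.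
Qed.

Lemma hf_lin_comb_in a W w : orthonormal W -> In w W -> h (lin_comb a W) w = a w.
Proof.
  induction W as [|t W' IH]; simpl; [tauto|]. intros [Htt [Hort HW]] Hin.
  rewrite hf_add_l, hf_scal_l.
  destruct Hin as [->|Hin].
  - rewrite hf_lin_comb_l, Clsum_zero, Htt; [C_ring|].
    intros s Hs. rewrite (hf_sym h w s), Hort by auto. C_ring.
  - rewrite IH, Hort by auto. C_ring.
Qed.

Lemma hf_lin_comb_orth a W t : (forall w, In w W -> h w t = C0) -> h (lin_comb a W) t = C0.
Proof. intros Hort. rewrite hf_lin_comb_l. apply Clsum_zero. intros w Hw. rewrite Hort by auto. C_ring. Qed.

Lemma hf_lin_comb_self a W : orthonormal W ->
  h (lin_comb a W) (lin_comb a W) = RtoC (Rlsum (fun w => Cmod2 (a w)) W).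
Proof.
  induction W as [|t W' IH]; simpl; intros HW.
  - rewrite hf_zero_l. C_ring.
  - destruct HW as [Htt [Hort HW]].
    rewrite hf_add_l, !hf_add_r, !hf_scal_l, !hf_scal_r, Htt, IH by auto.
    assert (E : h (lin_comb a W') t = C0).
    { apply hf_lin_comb_orth. intros w Hw. rewrite hf_sym, Hort by auto. C_ring. }
    rewrite E, (hf_sym h (lin_comb a W') t), E. unfold Cmod2. C_ring.
Qed.

Definition proj W x : X := lin_comb (fun w => h x w) W.
Definition resid W x : X := csub x (proj W x).

Lemma hf_resid_in W x w : orthonormal W -> In w W -> h (resid W x) w = C0.
Proof. intros. unfold resid, proj. rewrite hf_sub_l, hf_lin_comb_in by auto. C_ring. Qed.

Lemma hf_resid_self W x : orthonormal W ->
  Cre (h (resid W x) (resid W x)) = Cre (h x x) - Rlsum (fun w => Cmod2 (h x w)) W.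
Proof.
  intros HW. unfold resid at 1. rewrite hf_sub_l.
  assert (E : h (proj W x) (resid W x) = C0).
  { apply hf_lin_comb_orth. intros w Hw. rewrite hf_sym, hf_resid_in by auto. C_ring. }
  rewrite E. unfold resid. rewrite hf_sub_r, (hf_sym h (proj W x) x).
  assert (E2 : h (proj W x) x = RtoC (Rlsum (fun w => Cmod2 (h x w)) W)).
  { unfold proj. rewrite hf_lin_comb_l. clear E. induction W; simpl; [C_ring|].
    rewrite IHW by (destruct HW as [_ [_ ?]]; auto).
    rewrite (hf_sym h a x). unfold Cmod2. C_ring. }
  rewrite E2. simpl. ring.
Qed.

Lemma proj_of_span W x : orthonormal W -> span W x -> x = proj W x.
Proof.
  revert x; induction W as [|w W IH]; simpl; intros x HW Hx; auto.
  destruct HW as [Hww [Hort HW]]. destruct Hx as [c [y [Hy ->]]].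
  unfold proj; simpl. f_equal.
  - f_equal. rewrite hf_add_l, hf_scal_l, Hww, (hf_span_orth W y w Hy); [C_ring|].
    intros t Ht. rewrite hf_sym, Hort by auto. C_ring.
  - rewrite (IH y HW Hy) at 1. apply lin_comb_ext.
    intros t Ht. rewrite hf_add_l, hf_scal_l, Hort by auto. C_ring.
Qed.

Lemma resid_cons_null W w x : orthonormal (w :: W) ->
  Cre (h (resid W x) (resid W x)) = 0 -> Cre (h (resid (w :: W) x) (resid (w :: W) x)) = 0.
Proof.
  intros HW E. pose proof (hf_pos h (resid (w :: W) x)) as P.
  assert (HW' : orthonormal W) by (destruct HW as [_ [_ ?]]; auto).
  rewrite hf_resid_self in * by auto. simpl in *.
  pose proof (Cmod2_ge0 (h x w)). lra.
Qed.

Definition normalize x : X := csc (RtoC (/ sqrt (Cre (h x x)))) x.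

Lemma orthonormal_cons_resid W x : orthonormal W -> 0 < Cre (h (resid W x) (resid W x)) ->
  orthonormal (normalize (resid W x) :: W) /\ x = proj (normalize (resid W x) :: W) x.
Proof.
  intros HW Hd. set (r := resid W x). fold r in Hd. set (d := Cre (h r r)) in Hd.
  set (q := sqrt d).
  assert (Hq : 0 < q) by (apply sqrt_lt_R0; auto).
  assert (Hqq : d = q * q) by (unfold q; rewrite sqrt_sqrt; lra).
  assert (Hrx : h x r = RtoC d).
  { rewrite <- (csubK x (proj W x)). fold (resid W x). fold r.
    rewrite hf_add_l. unfold proj. rewrite hf_lin_comb_orth.
    - rewrite hf_self_real. fold d. C_ring.
    - intros t Ht. rewrite hf_sym. unfold r. rewrite hf_resid_in by auto. C_ring. }
  split.
  - simpl. unfold normalize. fold r d q. repeat split; auto.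
    + rewrite hf_scal_l, hf_scal_r, (hf_self_real r). fold d.
      apply C_ext; simpl; rewrite Hqq; field; lra.
    + intros t Ht. rewrite hf_scal_l. unfold r. rewrite hf_resid_in by auto. C_ring.
  - unfold proj at 1; simpl. fold (proj W x). unfold normalize. fold r d q.
    rewrite csc_assoc.
    replace (Cmul (h x (csc (RtoC (/ q)) r)) (RtoC (/ q))) with C1.
    + rewrite csc_one. unfold r, resid. rewrite csubK. reflexivity.
    + rewrite hf_scal_r, Hrx. apply C_ext; simpl; rewrite Hqq; field; lra.
Qed.

(* Gram–Schmidt; [F] lists the indices whose vectors were kept, one for each element of [W]. *)
Lemma gram_schmidt (vf : nat -> X) (idx : list nat) : NoDup idx ->
  exists (W : list X) (F : list nat),
  orthonormal W /\ length W = length F /\ NoDup F /\ incl F idx /\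
  (forall w, In w W -> span (map vf idx) w) /\
  (forall n, In n idx -> Cre (h (resid W (vf n)) (resid W (vf n))) = 0) /\
  (forall n, In n F -> vf n = proj W (vf n)).
Proof.
  induction idx as [|n idx IH]; intros ND.
  { exists nil, nil. simpl. repeat split; try constructor; intros ? []. }
  inversion ND as [|? ? Hn ND']; subst.
  destruct (IH ND') as [W [F [HW [Hlen [HF [Hinc [Hsp [Hnull Hex]]]]]]]].
  destruct (Req_dec (Cre (h (resid W (vf n)) (resid W (vf n)))) 0) as [E|E].
  - exists W, F. split; [exact HW|]. repeat split; auto.
    + intros m Hm; right; auto.
    + intros w Hw; apply span_cons; auto.
    + intros m [<-|Hm]; auto.
  - assert (Hd : 0 < Cre (h (resid W (vf n)) (resid W (vf n)))) by (pose proof (hf_pos h (resid W (vf n))); lra).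
    destruct (orthonormal_cons_resid W (vf n) HW Hd) as [HW' Hexn].
    set (w' := normalize (resid W (vf n))) in *.
    exists (w' :: W), (n :: F). split; [exact HW'|]. repeat split; auto.
    + simpl; congruence.
    + constructor; auto.
    + intros m [<-|Hm]; [left | right]; auto.
    + intros w [<-|Hw]; [|apply span_cons; auto].
      unfold w', normalize. apply span_scal, span_sub; [apply span_in; simpl; auto|].
      apply span_lin_comb. intros t Ht. apply span_cons. auto.
    + intros m [<-|Hm]; [|apply resid_cons_null; auto].
      unfold resid. rewrite <- Hexn, csubvv, hf_zero_l. reflexivity.
    + intros m [<-|Hm]; auto.
      assert (E0 : h (vf m) w' = C0).
      { rewrite (Hex m Hm). apply hf_lin_comb_orth. intros t Ht.
        destruct HW' as [_ [Hort _]]. rewrite hf_sym, Hort by auto. C_ring. }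
      unfold proj at 1; simpl. rewrite E0, csc_zero_l, cad_zero_l. apply Hex; auto.
Qed.

Lemma orthonormal_basis_of_span (L : list X) :
  (forall x, span L x -> Cre (h x x) = 0 -> x = cz) ->
  exists W, orthonormal W /\ (forall w, In w W -> span L w) /\ (forall t, In t L -> span W t).
Proof.
  intros Hdef.
  set (vf := fun n => nth n L cz). set (idx := seq 0 (length L)).
  assert (Hmap : map vf idx = L).
  { unfold vf, idx. clear. induction L as [|a L IH]; simpl; auto.
    f_equal. rewrite <- seq_shift, map_map. exact IH. }
  destruct (gram_schmidt vf idx (seq_NoDup _ _)) as [W [_ [HW [_ [_ [_ [Hsp [Hnull _]]]]]]]].
  rewrite Hmap in Hsp. exists W. split; [exact HW|]. split; auto.
  intros t Ht. rewrite <- Hmap in Ht. apply in_map_iff in Ht. destruct Ht as [n [<- Hn]].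
  assert (E : resid W (vf n) = cz).
  { apply Hdef; [|apply Hnull; auto].
    apply span_sub; [rewrite <- Hmap; apply span_in, in_map; auto|].
    apply span_lin_comb; auto. }
  apply csub_eq0 in E. rewrite E. apply span_lin_comb. intros; apply span_in; auto.
Qed.

End Form.

Definition form_diff (h g : HForm X) (Hgh : forall x, Cre (g x x) <= Cre (h x x)) : HForm X.
Proof.
  refine (Build_HForm X (fun x y => Cadd (h x y) (Copp (g x y))) _ _ _ _).
  - intros. rewrite !hf_add_l. C_ring.
  - intros. rewrite !hf_scal_l. C_ring.
  - intros. rewrite (hf_sym h x y), (hf_sym g x y). C_ring.
  - intros x. simpl. specialize (Hgh x). lra.
Defined.

Lemma hf_le_on_span (h g : HForm X) W a : orthonormal g W -> span W a ->
  Cre (h a a) <= Rlsum (fun w => Cre (h w w)) W * Cre (g a a).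
Proof.
  intros HW Ha.
  assert (Ea : a = lin_comb (fun w => g a w) W) by exact (proj_of_span g W a HW Ha).
  pose proof (hf_lin_comb_norm_le h (fun w => g a w) W) as Hnorm. rewrite <- Ea in Hnorm.
  pose proof (Rlsum_cauchy_schwarz _ (fun w => Cabs (g a w)) (fun w => sqrt (Cre (h w w))) W) as LC.
  rewrite (Rlsum_ext _ (fun w => Cabs (g a w) * Cabs (g a w)) (fun w => Cmod2 (g a w))) in LC
    by (intros; apply Cabs_sq).
  rewrite (Rlsum_ext _ (fun w => sqrt (Cre (h w w)) * sqrt (Cre (h w w))) (fun w => Cre (h w w))) in LC
    by (intros; apply sqrt_sqrt, hf_pos).
  pose proof (hf_resid_self g W a HW) as Bessel.
  pose proof (hf_pos g (resid g W a)).
  set (L := Rlsum (fun w => Cabs (g a w) * sqrt (Cre (h w w))) W) in *.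
  pose proof (sqrt_pos (Cre (h a a))).
  assert (HL : Cre (h a a) <= L * L).
  { rewrite <- (sqrt_sqrt (Cre (h a a))) by apply hf_pos. apply Rmult_le_compat; auto. }
  assert (0 <= Rlsum (fun w => Cre (h w w)) W) by (apply Rlsum_ge0; intros; apply hf_pos).
  eapply Rle_trans; [exact HL|]. eapply Rle_trans; [exact LC|]. rewrite Rmult_comm.
  apply Rmult_le_compat_l; auto. lra.
Qed.

End VectorSpace.

Definition Csum (g : nat -> C) (N : nat) : C :=
  mkC (sum_f_R0 (fun k => Cre (g k)) N) (sum_f_R0 (fun k => Cim (g k)) N).

Lemma sum_lin (u v : nat -> R) a b N :
  sum_f_R0 (fun k => a * u k + b * v k) N = a * sum_f_R0 u N + b * sum_f_R0 v N.
Proof. induction N; simpl; [ring|]. rewrite IHN. ring. Qed.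

Lemma sum_eq_zero (u : nat -> R) N : (forall k, (k <= N)%nat -> u k = 0) -> sum_f_R0 u N = 0.
Proof. intros E. rewrite (sum_eq _ (fun _ => 0)), sum_cte by auto. ring. Qed.

Lemma Csum_ext g1 g2 N : (forall k, (k <= N)%nat -> g1 k = g2 k) -> Csum g1 N = Csum g2 N.
Proof. intros E. unfold Csum; f_equal; apply sum_eq; intros i Hi; rewrite (E i Hi); auto. Qed.

Lemma Csum_S g N : Csum g (S N) = Cadd (Csum g N) (g (S N)).
Proof. reflexivity. Qed.

Lemma Csum_add g1 g2 N : Csum (fun k => Cadd (g1 k) (g2 k)) N = Cadd (Csum g1 N) (Csum g2 N).
Proof. unfold Csum; apply C_ext; simpl; rewrite <- sum_plus; reflexivity. Qed.

Lemma Csum_scal a g N : Csum (fun k => Cmul a (g k)) N = Cmul a (Csum g N).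
Proof.
  unfold Csum; apply C_ext; simpl.
  - transitivity (sum_f_R0 (fun k => Cre a * Cre (g k) + (- Cim a) * Cim (g k)) N).
    + apply sum_eq; intros; simpl; ring.
    + rewrite sum_lin. ring.
  - transitivity (sum_f_R0 (fun k => Cre a * Cim (g k) + Cim a * Cre (g k)) N).
    + apply sum_eq; intros; simpl; ring.
    + rewrite sum_lin. ring.
Qed.

Lemma Csum_conj g N : Csum (fun k => Cconj (g k)) N = Cconj (Csum g N).
Proof.
  unfold Csum; apply C_ext; simpl; auto.
  transitivity (sum_f_R0 (fun k => (-1) * Cim (g k) + 0 * 0) N).
  - apply sum_eq; intros; simpl; ring.
  - rewrite sum_lin. ring.
Qed.

Lemma Csum_delta (g : nat -> C) n N : (n <= N)%nat ->
  Csum (fun k => if Nat.eqb k n then g k else C0) N = g n.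
Proof.
  induction N; intros Hn.
  - assert (n = 0%nat) by lia. subst. apply C_ext; reflexivity.
  - rewrite Csum_S. destruct (Nat.eq_dec n (S N)) as [->|Hne].
    + rewrite Nat.eqb_refl.
      replace (Csum _ N) with C0; [C_ring|].
      apply C_ext; simpl; symmetry; apply sum_eq_zero; intros k Hk;
        destruct (Nat.eqb_spec k (S N)); first [lia | reflexivity].
    + rewrite IHN by lia. destruct (Nat.eqb_spec (S N) n); [lia|]. C_ring.
Qed.

Definition Clim (u : nat -> C) (L : C) : Prop :=
  Un_cv (fun n => Cre (u n)) (Cre L) /\ Un_cv (fun n => Cim (u n)) (Cim L).

Lemma Un_cv_const r : Un_cv (fun _ => r) r.
Proof. intros e he; exists O; intros; unfold Rdist; rewrite Rminus_diag, Rabs_R0; lra. Qed.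

Lemma Clim_unique u L1 L2 : Clim u L1 -> Clim u L2 -> L1 = L2.
Proof. intros [Hre1 Him1] [Hre2 Him2]. apply C_ext; eapply UL_sequence; eauto. Qed.

Lemma Clim_ext u v L : (forall n, u n = v n) -> Clim u L -> Clim v L.
Proof.
  intros E [Hre Him]. split; eapply Un_cv_ext; eauto; intro n; simpl; rewrite E; auto.
Qed.

Lemma Clim_add u v L1 L2 : Clim u L1 -> Clim v L2 -> Clim (fun n => Cadd (u n) (v n)) (Cadd L1 L2).
Proof. intros [Hre1 Him1] [Hre2 Him2]. split; simpl; apply CV_plus; auto. Qed.

Lemma Clim_scal a u L : Clim u L -> Clim (fun n => Cmul a (u n)) (Cmul a L).
Proof.
  intros [Hre Him]. split; simpl.
  - apply CV_minus; apply CV_mult; auto; apply Un_cv_const.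
  - apply CV_plus; apply CV_mult; auto; apply Un_cv_const.
Qed.

Lemma Clim_conj u L : Clim u L -> Clim (fun n => Cconj (u n)) (Cconj L).
Proof. intros [Hre Him]. split; simpl; auto. apply CV_opp in Him. exact Him. Qed.

Lemma Clim_of_Cmod2 u L :
  (forall eps, eps > 0 -> exists N, forall n, (n >= N)%nat ->
     Cmod2 (Cadd (u n) (Copp L)) < eps) -> Clim u L.
Proof.
  intros K. split; intros eps He; destruct (K (eps * eps)) as [N HN]; try nra;
    exists N; intros n Hn; specialize (HN n Hn); unfold Cmod2 in HN; simpl in HN;
    unfold Rdist; apply Rabs_def1.
  - pose proof (Rle_0_sqr (Cim (u n) + - Cim L)). unfold Rsqr in *. nra.
  - pose proof (Rle_0_sqr (Cim (u n) + - Cim L)). unfold Rsqr in *. nra.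
  - pose proof (Rle_0_sqr (Cre (u n) + - Cre L)). unfold Rsqr in *. nra.
  - pose proof (Rle_0_sqr (Cre (u n) + - Cre L)). unfold Rsqr in *. nra.
Qed.

Lemma lim_le (u : nat -> R) L c : Un_cv u L -> (forall n, u n <= c) -> L <= c.
Proof. intros Hu Hc. exact (Rle_cv_lim Hc Hu (Un_cv_const c)). Qed.

Lemma lim_ge (u : nat -> R) L c : Un_cv u L -> (forall n, c <= u n) -> c <= L.
Proof. intros Hu Hc. exact (Rle_cv_lim Hc (Un_cv_const c) Hu). Qed.

Lemma Un_cv_tail u v L M : (forall n, (n >= M)%nat -> u n = v n) -> Un_cv u L -> Un_cv v L.
Proof.
  intros E Hu eps He. destruct (Hu eps He) as [N HN]. exists (max N M). intros n Hn.
  rewrite <- E by lia. apply HN. lia.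
Qed.

Lemma nonneg_series_bounded_cv (t : nat -> R) (K : R) :
  (forall n, 0 <= t n) -> (forall M, sum_f_R0 t M <= K) -> exists s, infinite_sum t s.
Proof.
  intros Ht HK. destruct (growing_cv (sum_f_R0 t)) as [s Hs].
  - intro n. simpl. pose proof (Ht (S n)). lra.
  - exists K. intros x [i ->]. apply HK.
  - exists s. exact Hs.
Qed.

Lemma sum_Rlsum_swap {T} (g : nat -> T -> R) W M :
  sum_f_R0 (fun n => Rlsum (fun w => g n w) W) M = Rlsum (fun w => sum_f_R0 (fun n => g n w) M) W.
Proof.
  induction W as [|a W IH]; simpl.
  - rewrite sum_cte. ring.
  - rewrite sum_plus, IH. reflexivity.
Qed.

(** * The coefficient space [C^N] with the standard form on the first [M+1] coordinates *)

Definition Cseq : CVSpace.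
Proof.
  refine {| cv := nat -> C; cz := fun _ => C0; cad := fun a b k => Cadd (a k) (b k);
            csc := fun c a k => Cmul c (a k) |};
    intros; apply functional_extensionality; intros; C_ring.
Defined.

Definition std_form (M : nat) : HForm Cseq.
Proof.
  refine (Build_HForm Cseq (fun a b => Csum (fun k => Cmul (a k) (Cconj (b k))) M) _ _ _ _).
  - intros. simpl. rewrite <- Csum_add. apply Csum_ext; intros; C_ring.
  - intros. simpl. rewrite <- Csum_scal. apply Csum_ext; intros; C_ring.
  - intros. simpl. rewrite <- Csum_conj. apply Csum_ext; intros; C_ring.
  - intros. unfold Csum; simpl. apply cond_pos_sum. intros; simpl. nra.
Defined.

Lemma std_form_self M a : Cre (std_form M a a) = sum_f_R0 (fun k => Cmod2 (a k)) M.
Proof. simpl. apply sum_eq; intros; unfold Cmod2; simpl; ring. Qed.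

Definition unit_vec (n : nat) : nat -> C := fun k => if Nat.eqb k n then C1 else C0.

Lemma std_form_unit_l M n a : (n <= M)%nat -> std_form M (unit_vec n) a = Cconj (a n).
Proof.
  intros Hn. simpl. rewrite <- (Csum_delta (fun k => Cconj (a k)) n M Hn).
  apply Csum_ext; intros k _; unfold unit_vec; destruct (Nat.eqb k n); C_ring.
Qed.

Section Hilbert.
Variable H : CHilbert.

Lemma vscal_C0 (x : H) : vscal C0 x = vzero.
Proof.
  set (y := vscal C0 x).
  assert (E : vadd y y = y).
  { unfold y. rewrite <- vscal_distr_c. f_equal. C_ring. }
  transitivity (vadd y (vadd y (vopp y))).
  - rewrite vadd_opp, vadd_comm, vadd_zero. reflexivity.
  - rewrite vadd_assoc, E, vadd_opp. reflexivity.
Qed.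

Definition H_space : CVSpace := {| cv := vec H; cz := vzero; cad := vadd; csc := vscal;
  cad_assoc := vadd_assoc H; cad_comm := vadd_comm H; cad_zero_l := vadd_zero H;
  csc_assoc := vscal_assoc H; csc_one := vscal_one H; csc_distr_v := vscal_distr_v H;
  csc_distr_c := vscal_distr_c H; csc_zero_l := vscal_C0 |}.

Definition H_inner : HForm H_space := Build_HForm H_space (@inner H) (inner_add_l H)
  (inner_scal_l H) (inner_conj_sym H) (inner_pos H).

Lemma vsub_csub (x y : H) : vsub H x y = @csub H_space x y.
Proof.
  unfold vsub, csub; simpl. f_equal.
  assert (E : vadd y (vscal Cneg1 y) = vzero).
  { rewrite <- (vscal_one H y) at 1. rewrite <- vscal_distr_c.
    replace (Cadd C1 Cneg1) with C0 by C_ring. apply vscal_C0. }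
  transitivity (vadd (vopp y) (vadd y (vscal Cneg1 y))).
  - rewrite E, vadd_comm, vadd_zero. auto.
  - rewrite vadd_assoc, (vadd_comm H (vopp y) y), vadd_opp, vadd_zero. auto.
Qed.

Lemma inner_zero_l (y : H) : inner vzero y = C0.
Proof. exact (hf_zero_l H_space H_inner y). Qed.

Lemma inner_add_r (z x y : H) : inner z (vadd x y) = Cadd (inner z x) (inner z y).
Proof. exact (hf_add_r H_space H_inner z x y). Qed.

Lemma inner_scal_r a (z x : H) : inner z (vscal a x) = Cmul (Cconj a) (inner z x).
Proof. exact (hf_scal_r H_space H_inner a z x). Qed.

Lemma inner_sub_l (x y z : H) : inner (@csub H_space x y) z = Cadd (inner x z) (Copp (inner y z)).
Proof. exact (hf_sub_l H_space H_inner x y z). Qed.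

Lemma inner_cauchy_schwarz (x y : H) : Cmod2 (inner x y) <= Cre (inner x x) * Cre (inner y y).
Proof. exact (hf_cauchy_schwarz H_space H_inner x y). Qed.

Lemma inner_self_im (x : H) : Cim (inner x x) = 0.
Proof. apply (hf_self_im H_space H_inner). Qed.

Lemma inner_self_eq0 (x : H) : Cre (inner x x) = 0 -> x = vzero.
Proof. intro E. apply inner_def. apply C_ext; simpl; auto. apply inner_self_im. Qed.

Lemma vnorm_sq (x : H) : vnorm H x ^ 2 = Cre (inner x x).
Proof. unfold vnorm. simpl. rewrite Rmult_1_r. apply sqrt_sqrt. apply inner_pos. Qed.

Lemma in_span_span (l : list H) x : in_span H l x -> span H_space l x.
Proof.
  revert x; induction l as [|v l IH]; simpl; intros x Hx; [exact Hx|].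
  destruct Hx as [c [y [Hy E]]]. exists c, y. split; auto.
Qed.

Fixpoint vsum (g : nat -> H) (N : nat) : H :=
  match N with O => g O | S N' => vadd (vsum g N') (g (S N')) end.

Lemma inner_vsum_l g N y : inner (vsum g N) y = Csum (fun k => inner (g k) y) N.
Proof.
  induction N; simpl; [apply C_ext; reflexivity|].
  rewrite inner_add_l, IHN, Csum_S. reflexivity.
Qed.

Lemma vsum_ext g1 g2 M : (forall k, (k <= M)%nat -> g1 k = g2 k) -> vsum g1 M = vsum g2 M.
Proof. induction M; intros E; simpl; [apply E; auto|]. rewrite IHM, E by auto. reflexivity. Qed.

Lemma Clsum_inner_self (W : list H) y :
  Cre (Clsum (fun z => Cmul (inner y z) (inner z y)) W) = Rlsum (fun z => Cmod2 (inner y z)) W.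
Proof.
  induction W as [|a W IH]; simpl; auto. rewrite (inner_conj_sym H a y), IH.
  unfold Cmod2; simpl. ring.
Qed.

Lemma vsum_zero M : vsum (fun _ => vzero) M = vzero.
Proof. induction M; simpl; auto. rewrite IHM. apply vadd_zero. Qed.

End Hilbert.

Arguments inner_zero_l {H}. Arguments inner_add_r {H}. Arguments inner_scal_r {H}.
Arguments inner_sub_l {H}. Arguments inner_cauchy_schwarz {H}. Arguments inner_self_im {H}.
Arguments inner_self_eq0 {H}. Arguments vnorm_sq {H}. Arguments vsub_csub {H}.

(** * The frame operator *)

Section Frame.
Variable H : CHilbert.
Variable f : nat -> H.
Variables A B : R.
Hypothesis HA : 0 < A.
Hypothesis Hlower : forall x, exists s, infinite_sum (frame_terms H (fun _ => true) f x) s /\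
  A * vnorm H x ^ 2 <= s.
Hypothesis Hopt : optimal_upper_frame_bound H f B.

Notation HS := (H_space H).

Definition fterm (x : H) (n : nat) : R := Cmod2 (inner x (f n)).

Lemma fterm_ge0 x n : 0 <= fterm x n.
Proof. apply Cmod2_ge0. Qed.

(* If H were trivial, every real number would be an upper frame bound. *)
Lemma exists_nonzero : exists x : H, x <> vzero.
Proof.
  apply NNPP. intro Hall.
  assert (Hzero : forall x : H, x = vzero) by (intro x; apply NNPP; eauto).
  assert (Hub : upper_frame_bound H f (B - 1)).
  { intro x. rewrite (Hzero x). exists 0. split.
    - eapply Un_cv_ext; [|apply Un_cv_const]. intro N. simpl.
      symmetry. apply sum_eq_zero. intros k _.
      unfold frame_terms. rewrite inner_zero_l. unfold Cmod2; simpl; ring.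
    - rewrite vnorm_sq, inner_zero_l. simpl. lra. }
  pose proof (proj1 Hopt _ Hub). lra.
Qed.

Lemma A_le_B : A <= B.
Proof.
  apply (proj2 Hopt). intros B' HB'.
  destruct exists_nonzero as [x Hx].
  destruct (HB' x) as [s' [Hs' Hle]]. destruct (Hlower x) as [s [Hs Hge]].
  assert (s = s') by (eapply UL_sequence; eauto). subst.
  assert (Hxpos : 0 < vnorm H x ^ 2).
  { rewrite vnorm_sq. pose proof (inner_pos H x).
    destruct (Req_dec (Cre (inner x x)) 0) as [E|E]; [|lra].
    exfalso. apply Hx, inner_self_eq0, E. }
  nra.
Qed.

Lemma B_pos : 0 < B.
Proof. pose proof A_le_B. lra. Qed.

Lemma fterm_partial_sum_le x N : sum_f_R0 (fterm x) N <= B * Cre (inner x x).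
Proof.
  destruct (Rle_dec (sum_f_R0 (fterm x) N) (B * Cre (inner x x))) as [?|Hgt]; auto. exfalso.
  set (nx := Cre (inner x x)) in *. set (S0 := sum_f_R0 (fterm x) N) in *.
  assert (Hnx : 0 < nx).
  { pose proof (inner_pos H x). destruct (Req_dec nx 0) as [E|E]; [|unfold nx in *; lra].
    apply inner_self_eq0 in E. subst x. unfold S0 in Hgt.
    rewrite sum_eq_zero in Hgt; [unfold nx in Hgt; rewrite inner_zero_l in Hgt; simpl in Hgt; lra|].
    intros k _. unfold fterm. rewrite inner_zero_l. unfold Cmod2; simpl; ring. }
  (* [S0 / nx] is a lower bound for all upper frame bounds, hence at most their infimum [B] *)
  assert (Hratio : S0 / nx <= B).
  { apply (proj2 Hopt). intros B'' HB''. destruct (HB'' x) as [s [Hs Hle]].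
    rewrite vnorm_sq in Hle. fold nx in Hle.
    assert (S0 <= s) by (apply sum_incr; auto; apply fterm_ge0).
    apply (Rmult_le_reg_r nx); auto. unfold Rdiv. rewrite Rmult_assoc, Rinv_l; lra. }
  apply (Rmult_le_compat_r nx) in Hratio; [|lra].
  unfold Rdiv in Hratio. rewrite Rmult_assoc, Rinv_l in Hratio; lra.
Qed.

Lemma frame_sum_bounds x : exists s, Un_cv (sum_f_R0 (fterm x)) s /\
  A * Cre (inner x x) <= s /\ s <= B * Cre (inner x x).
Proof.
  destruct (Hlower x) as [s [Hs Hge]]. rewrite vnorm_sq in Hge.
  exists s. repeat split; auto. eapply lim_le; eauto. apply fterm_partial_sum_le.
Qed.

Lemma frame_vector_norm_le n : vnorm H (f n) ^ 2 <= B.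
Proof.
  rewrite vnorm_sq. pose proof B_pos.
  pose proof (fterm_partial_sum_le (f n) n) as Hsum.
  assert (Hlast : fterm (f n) n <= sum_f_R0 (fterm (f n)) n).
  { destruct n; simpl; [lra|]. pose proof (cond_pos_sum (fterm (f (S n))) n (fterm_ge0 _)). lra. }
  set (S := sum_f_R0 (fterm (f n)) n) in *.
  unfold fterm, Cmod2 in Hlast. rewrite inner_self_im in Hlast.
  pose proof (inner_pos H (f n)). set (r := Cre (inner (f n) (f n))) in *.
  destruct (Req_dec r 0); [lra|]. nra.
Qed.

Definition synth (M : nat) (a : nat -> C) : H := vsum H (fun k => vscal (a k) (f k)) M.

Lemma inner_synth_l M a y : inner (synth M a) y = Csum (fun k => Cmul (a k) (inner (f k) y)) M.
Proof. unfold synth. rewrite inner_vsum_l. apply Csum_ext; intros; apply inner_scal_l. Qed.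

Lemma synth_norm_le M a : Cre (inner (synth M a) (synth M a)) <= B * Cre (std_form M a a).
Proof.
  set (y := synth M a). set (b := fun k => inner y (f k)).
  assert (E : inner y y = std_form M a b).
  { unfold y at 1. rewrite inner_synth_l. simpl. apply Csum_ext. intros. unfold b.
    rewrite (inner_conj_sym H y (f k)). C_ring. }
  pose proof (hf_cauchy_schwarz Cseq (std_form M) a b) as Hcs. rewrite <- E in Hcs.
  assert (Hb : Cre (std_form M b b) <= B * Cre (inner y y))
    by (rewrite std_form_self; apply fterm_partial_sum_le).
  pose proof (inner_self_im y) as Him. pose proof (inner_pos H y).
  pose proof (hf_pos (std_form M) a). pose proof (hf_pos (std_form M) b). pose proof B_pos.
  unfold Cmod2 in Hcs. rewrite Him in Hcs.
  set (ny := Cre (inner y y)) in *. set (na := Cre (std_form M a a)) in *.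
  destruct (Req_dec ny 0) as [Z|Z]; [rewrite Z; nra|]. nra.
Qed.

Lemma frame_psum_synth x n : frame_psum H f x n = synth n (fun k => inner x (f k)).
Proof. induction n; simpl; [reflexivity|]. rewrite IHn. reflexivity. Qed.

Definition tail_coef (x : H) (n k : nat) : C := if Nat.leb k n then C0 else inner x (f k).

Lemma frame_psum_diff x n m : (n <= m)%nat ->
  @csub HS (frame_psum H f x m) (frame_psum H f x n) = synth m (tail_coef x n).
Proof.
  intros Hnm. induction Hnm as [|m Hnm IH].
  - rewrite (csubvv HS). unfold synth.
    rewrite (vsum_ext H _ (fun _ => vzero)), vsum_zero; [reflexivity|].
    intros k Hk. unfold tail_coef. rewrite (proj2 (Nat.leb_le k n)) by lia. apply vscal_C0.
  - unfold synth in *. simpl. unfold tail_coef at 2.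
    rewrite (proj2 (Nat.leb_gt (S m) n)) by lia.
    rewrite <- IH. unfold csub. simpl. rewrite <- !(vadd_assoc H). f_equal. apply vadd_comm.
Qed.

Lemma tail_coef_norm x n m : (n <= m)%nat ->
  Cre (std_form m (tail_coef x n) (tail_coef x n)) = sum_f_R0 (fterm x) m - sum_f_R0 (fterm x) n.
Proof.
  intros Hnm. rewrite std_form_self. induction Hnm as [|m Hnm IH].
  - rewrite sum_eq_zero; [ring|]. intros k Hk.
    unfold tail_coef. rewrite (proj2 (Nat.leb_le k n)) by lia. unfold Cmod2; simpl; ring.
  - rewrite !tech5, IH. unfold tail_coef. rewrite (proj2 (Nat.leb_gt (S m) n)) by lia.
    unfold fterm. ring.
Qed.

(* The partial sums of [sum_n <x,f_n> f_n] are Cauchy by [synth_norm_le]. *)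
Lemma frame_op_exists x : exists y, frame_op_at H f x y.
Proof.
  destruct (frame_sum_bounds x) as [s [Hs _]]. pose proof B_pos as HB.
  destruct (complete H (fun n => frame_psum H f x n)) as [y Hy]; [|exists y; exact Hy].
  intros eps He.
  destruct (Hs (eps * eps / (2 * B))) as [N HN]; [apply Rdiv_lt_0_compat; nra|].
  exists N. intros m n Hm Hn.
  assert (key : forall m n, (m >= N)%nat -> (n >= N)%nat -> (n <= m)%nat ->
    Cre (inner (@csub HS (frame_psum H f x m) (frame_psum H f x n))
               (@csub HS (frame_psum H f x m) (frame_psum H f x n))) < eps * eps).
  { clear m n Hm Hn. intros m n Hm Hn Hnm. rewrite frame_psum_diff by auto.
    eapply Rle_lt_trans; [apply synth_norm_le|]. rewrite tail_coef_norm by auto.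
    pose proof (HN m Hm) as Hm'. pose proof (HN n Hn) as Hn'. unfold Rdist in *.
    apply Rabs_def2 in Hm'. apply Rabs_def2 in Hn'.
    assert (Hq : eps * eps / (2 * B) * (2 * B) = eps * eps) by (field; lra).
    set (q := eps * eps / (2 * B)) in *. nra. }
  change (vnorm H (vsub H (frame_psum H f x m) (frame_psum H f x n)) < eps).
  unfold vnorm. rewrite vsub_csub.
  rewrite <- (sqrt_square eps) by lra. apply sqrt_lt_1; [apply (hf_pos (H_inner H)) | nra |].
  destruct (Nat.le_ge_cases n m).
  - apply key; auto.
  - eapply Rle_lt_trans; [right; exact (hf_sub_sym HS (H_inner H) _ _)|]. apply key; auto.
Qed.

Definition frame_op x : H := proj1_sig (constructive_indefinite_description _ (frame_op_exists x)).

Lemma frame_op_spec x : frame_op_at H f x (frame_op x).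
Proof. unfold frame_op. destruct (constructive_indefinite_description _ _). auto. Qed.

Lemma frame_op_inner_lim x y :
  Clim (fun N => Csum (fun n => Cmul (inner x (f n)) (inner (f n) y)) N) (inner (frame_op x) y).
Proof.
  apply Clim_of_Cmod2. intros eps He.
  set (ny := Cre (inner y y)). pose proof (inner_pos H y) as Hny. fold ny in Hny.
  destruct (frame_op_spec x (sqrt (eps / (ny + 1)))) as [N HN];
    [apply sqrt_lt_R0, Rdiv_lt_0_compat; lra|].
  exists N. intros n Hn. specialize (HN n Hn).
  unfold vnorm in HN. rewrite vsub_csub in HN.
  set (d := @csub HS (frame_psum H f x n) (frame_op x)) in *.
  apply sqrt_lt_0_alt in HN.
  assert (E : Cadd (Csum (fun k => Cmul (inner x (f k)) (inner (f k) y)) n)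
                   (Copp (inner (frame_op x) y)) = inner d y).
  { unfold d. rewrite inner_sub_l. f_equal.
    rewrite frame_psum_synth, inner_synth_l. reflexivity. }
  rewrite E. eapply Rle_lt_trans; [apply inner_cauchy_schwarz|]. fold ny.
  pose proof (inner_pos H d).
  apply (Rmult_lt_compat_r (ny + 1)) in HN; [|lra]. unfold Rdiv in HN.
  rewrite Rmult_assoc, Rinv_l in HN; nra.
Qed.

Definition sf (x y : H) : C := inner (frame_op x) y.

Lemma sf_add x x' y : sf (vadd x x') y = Cadd (sf x y) (sf x' y).
Proof.
  eapply Clim_unique; [apply frame_op_inner_lim|].
  eapply Clim_ext; [|apply Clim_add; apply frame_op_inner_lim].
  intro N. simpl. rewrite <- Csum_add. apply Csum_ext. intros.
  rewrite inner_add_l. C_ring.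
Qed.

Lemma sf_scal a x y : sf (vscal a x) y = Cmul a (sf x y).
Proof.
  eapply Clim_unique; [apply frame_op_inner_lim|].
  eapply Clim_ext; [|apply Clim_scal; apply frame_op_inner_lim].
  intro N. simpl. rewrite <- Csum_scal. apply Csum_ext. intros.
  rewrite inner_scal_l. C_ring.
Qed.

Lemma sf_sym x y : sf y x = Cconj (sf x y).
Proof.
  eapply Clim_unique; [apply frame_op_inner_lim|].
  eapply Clim_ext; [|apply Clim_conj; apply frame_op_inner_lim].
  intro N. simpl. rewrite <- Csum_conj. apply Csum_ext. intros.
  rewrite (inner_conj_sym H x (f k)), (inner_conj_sym H y (f k)). C_ring.
Qed.

Lemma sf_self_lim x : Un_cv (sum_f_R0 (fterm x)) (Cre (sf x x)).
Proof.
  destruct (frame_op_inner_lim x x) as [Hre _]. eapply Un_cv_ext; [|exact Hre].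
  intro N. simpl. apply sum_eq. intros k _. rewrite (inner_conj_sym H x (f k)).
  unfold fterm, Cmod2; simpl. ring.
Qed.

Lemma sf_pos x : 0 <= Cre (sf x x).
Proof. eapply lim_ge; [apply sf_self_lim|]. intros. apply cond_pos_sum, fterm_ge0. Qed.

Definition frame_form : HForm HS := Build_HForm HS sf sf_add sf_scal sf_sym sf_pos.

Lemma sf_bounds x : A * Cre (inner x x) <= Cre (sf x x) /\ Cre (sf x x) <= B * Cre (inner x x).
Proof.
  destruct (frame_sum_bounds x) as [s [Hs Hb]].
  replace (Cre (sf x x)) with s by (eapply UL_sequence; [exact Hs | apply sf_self_lim]). auto.
Qed.

Lemma fterm_partial_sum_le_sf x N : sum_f_R0 (fterm x) N <= Cre (sf x x).
Proof. apply sum_incr; [apply sf_self_lim | apply fterm_ge0]. Qed.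

Lemma frame_form_definite x : Cre (sf x x) = 0 -> x = vzero.
Proof.
  intros E. apply inner_self_eq0. pose proof (proj1 (sf_bounds x)).
  pose proof (inner_pos H x). nra.
Qed.

(** * Using that [B I - S] has finite rank *)

Variable l : list H.
Hypothesis Hl : forall x y, frame_op_at H f x y -> in_span H l (vsub H (vscal (RtoC B) x) y).

Definition rank_part x : H := @csub HS (vscal (RtoC B) x) (frame_op x).

Lemma rank_part_span x : span HS l (rank_part x).
Proof. apply in_span_span. unfold rank_part. rewrite <- vsub_csub. apply Hl, frame_op_spec. Qed.

Lemma sf_rank_part x y : sf x y = Cadd (Cmul (RtoC B) (inner x y)) (Copp (inner (rank_part x) y)).
Proof. unfold rank_part. rewrite inner_sub_l, inner_scal_l. unfold sf. C_ring. Qed.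

Definition perp_l (w : H) : Prop := forall t, In t l -> inner t w = C0.

Lemma inner_span_perp v w : perp_l w -> span HS l v -> inner v w = C0.
Proof. intros Hw Hv. exact (hf_span_orth HS (H_inner H) l v w Hv Hw). Qed.

(* [S] acts as [B] on the orthogonal complement of [l] and leaves the span of [l] invariant. *)
Lemma sf_span_perp v w : span HS l v -> perp_l w ->
  Cre (sf (vadd v w) (vadd v w)) = Cre (sf v v) + B * Cre (inner w w).
Proof.
  intros Hv Hw.
  assert (E1 : sf v w = C0).
  { rewrite sf_rank_part, (inner_span_perp v w), (inner_span_perp (rank_part v) w)
      by (auto; apply rank_part_span). C_ring. }
  assert (E2 : sf w v = C0) by (rewrite sf_sym, E1; C_ring).
  assert (E3 : sf w w = Cmul (RtoC B) (inner w w)).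
  { rewrite sf_rank_part, (inner_span_perp (rank_part w) w) by (auto; apply rank_part_span). C_ring. }
  pose proof (hf_add_r HS frame_form) as Hadd. simpl in Hadd.
  rewrite sf_add, !Hadd, E1, E2, E3. simpl. ring.
Qed.

Section Bases.
Variables U Z : list H.
Hypothesis HU_on : orthonormal HS (H_inner H) U.
Hypothesis HU_sp : forall u, In u U -> span HS l u.
Hypothesis HlU : forall t, In t l -> span HS U t.
Hypothesis HZ_on : orthonormal HS frame_form Z.
Hypothesis HZ_sp : forall z, In z Z -> span HS l z.
Hypothesis HlZ : forall t, In t l -> span HS Z t.

Definition perp_part (y : H) : H := resid HS (H_inner H) U y.
Definition span_part (y : H) : H := proj HS (H_inner H) U y.

Lemma inner_span_U_perp_part x v : span HS U v -> inner v (perp_part x) = C0.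
Proof.
  intros Hv. apply (hf_span_orth HS (H_inner H) U v (perp_part x) Hv).
  intros u Hu. change (inner u (perp_part x) = C0).
  rewrite inner_conj_sym.
  replace (inner (perp_part x) u) with C0 by (symmetry; exact (hf_resid_in HS (H_inner H) U x u HU_on Hu)).
  C_ring.
Qed.

Lemma perp_part_perp x : perp_l (perp_part x).
Proof. intros t Ht. apply inner_span_U_perp_part. auto. Qed.

Lemma span_part_spanU x : span HS U (span_part x).
Proof. apply span_lin_comb. intros; apply span_in; auto. Qed.

Lemma span_part_span x : span HS l (span_part x).
Proof. apply span_lin_comb. auto. Qed.

Lemma perp_span_decomp x : x = vadd (perp_part x) (span_part x).
Proof. symmetry. exact (csubK HS x (span_part x)). Qed.

Lemma inner_perp_part_l x y : inner (perp_part x) y = inner (perp_part x) (perp_part y).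
Proof.
  rewrite (perp_span_decomp y) at 1. rewrite inner_add_r, (inner_conj_sym H (span_part y)).
  rewrite (inner_span_U_perp_part x (span_part y) (span_part_spanU y)). C_ring.
Qed.

Lemma inner_perp_part_r x y : inner x (perp_part y) = inner (perp_part x) (perp_part y).
Proof.
  rewrite (perp_span_decomp x) at 1. rewrite inner_add_l.
  rewrite (inner_span_U_perp_part y (span_part x) (span_part_spanU x)). C_ring.
Qed.

Lemma perp_part_norm_le x : Cre (inner (perp_part x) (perp_part x)) <= Cre (inner x x).
Proof.
  pose proof (hf_resid_self HS (H_inner H) U x HU_on) as E.
  change (Cre (inner (perp_part x) (perp_part x)) =
          Cre (inner x x) - Rlsum (fun w => Cmod2 (inner x w)) U) in E.
  rewrite E.
  assert (0 <= Rlsum (fun w : H => Cmod2 (inner x w)) U) by (apply Rlsum_ge0; intros; apply Cmod2_ge0).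
  lra.
Qed.

(* [dual x y] is [<S^-1 x, y>]: [S^-1] is [1/B] on the orthogonal complement of [l]
   and is read off the [S]-orthonormal basis [Z] on the span of [l]. *)
Definition dual (x y : H) : C :=
  Cadd (Cmul (RtoC (/ B)) (inner (perp_part x) (perp_part y)))
       (Clsum (fun z => Cmul (inner x z) (inner z y)) Z).

Lemma dual_alt x y : dual x y =
  Cadd (Cmul (RtoC (/ B)) (inner x (perp_part y))) (Clsum (fun z => Cmul (inner x z) (inner z y)) Z).
Proof. unfold dual. rewrite (inner_perp_part_r x y). reflexivity. Qed.

Lemma dual_add x x' y : dual (vadd x x') y = Cadd (dual x y) (dual x' y).
Proof.
  rewrite !dual_alt, inner_add_l.
  rewrite (Clsum_ext _ _ (fun z => Cadd (Cmul (inner x z) (inner z y)) (Cmul (inner x' z) (inner z y))))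
    by (intros; rewrite inner_add_l; C_ring).
  rewrite Clsum_add. C_ring.
Qed.

Lemma dual_scal a x y : dual (vscal a x) y = Cmul a (dual x y).
Proof.
  rewrite !dual_alt, inner_scal_l.
  rewrite (Clsum_ext _ _ (fun z => Cmul a (Cmul (inner x z) (inner z y))))
    by (intros; rewrite inner_scal_l; C_ring).
  rewrite Clsum_scal. C_ring.
Qed.

Lemma dual_sym x y : dual y x = Cconj (dual x y).
Proof.
  unfold dual. rewrite (inner_conj_sym H (perp_part x) (perp_part y)).
  rewrite (Clsum_ext _ _ (fun z => Cconj (Cmul (inner x z) (inner z y)))).
  - rewrite Clsum_conj. C_ring.
  - intros z _. rewrite (inner_conj_sym H z y), (inner_conj_sym H z x). C_ring.
Qed.

Lemma dual_self y : Cre (dual y y) =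
  / B * Cre (inner (perp_part y) (perp_part y)) + Rlsum (fun z => Cmod2 (inner y z)) Z.
Proof.
  unfold dual. simpl. rewrite (inner_self_im (perp_part y)), Clsum_inner_self. ring.
Qed.

Lemma dual_pos y : 0 <= Cre (dual y y).
Proof.
  rewrite dual_self. pose proof B_pos. apply Rplus_le_le_0_compat.
  - apply Rmult_le_pos; [left; apply Rinv_0_lt_compat; auto | apply inner_pos].
  - apply Rlsum_ge0. intros; apply Cmod2_ge0.
Qed.

Definition dual_form : HForm HS := Build_HForm HS dual dual_add dual_scal dual_sym dual_pos.

Lemma dual_synth_l M a y : dual (synth M a) y = Csum (fun k => Cmul (a k) (dual (f k) y)) M.
Proof.
  induction M.
  - unfold synth; simpl. rewrite dual_scal. apply C_ext; simpl; ring.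
  - unfold synth in *. simpl. rewrite dual_add, IHM, dual_scal, Csum_S. reflexivity.
Qed.

Lemma dual_synth_unit M n y : (n <= M)%nat -> dual (synth M (unit_vec n)) y = dual (f n) y.
Proof.
  intros Hn. rewrite dual_synth_l, <- (Csum_delta (fun k => dual (f k) y) n M Hn).
  apply Csum_ext; intros k _; unfold unit_vec; destruct (Nat.eqb k n); C_ring.
Qed.

(* The matrix [T* S^-1 T] of the first [M+1] frame vectors; [defect_form] is [I - T* S^-1 T]. *)

Definition dual_gram M (a b : nat -> C) : C := dual (synth M a) (synth M b).

Definition dual_gram_form (M : nat) : HForm Cseq.
Proof.
  refine (Build_HForm Cseq (dual_gram M) _ _ (fun a b => dual_sym (synth M a) (synth M b))
            (fun a => dual_pos (synth M a))).
  - intros a a' b. unfold dual_gram. rewrite !dual_synth_l, <- Csum_add.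
    apply Csum_ext; intros; C_ring.
  - intros c a b. unfold dual_gram. rewrite !dual_synth_l, <- Csum_scal.
    apply Csum_ext; intros; C_ring.
Defined.

(* [xs] is [S^-1 (T a)]; Cauchy–Schwarz in [C^(M+1)] for [<T a, xs> = <a, T* xs>]. *)
Lemma dual_gram_le_std M a : Cre (dual_gram M a a) <= Cre (std_form M a a).
Proof.
  set (y := synth M a).
  set (v := lin_comb HS (fun z => inner y z) Z).
  set (w := vscal (RtoC (/ B)) (perp_part y)).
  set (xs := vadd v w).
  pose proof B_pos as HB.
  assert (Hv : span HS l v) by (apply span_lin_comb; auto).
  assert (Hw : perp_l w).
  { intros t Ht. unfold w. rewrite inner_scal_r, (perp_part_perp y t Ht). C_ring. }
  assert (Ev : sf v v = RtoC (Rlsum (fun z => Cmod2 (inner y z)) Z))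
    by exact (hf_lin_comb_self HS frame_form (fun z => inner y z) Z HZ_on).
  assert (Ew : Cre (inner w w) = / B * / B * Cre (inner (perp_part y) (perp_part y))).
  { unfold w. rewrite inner_scal_l, inner_scal_r. simpl. rewrite (inner_self_im (perp_part y)). ring. }
  assert (Es : Cre (sf xs xs) = Cre (dual y y)).
  { unfold xs. rewrite sf_span_perp by auto. rewrite Ev, Ew, dual_self. simpl. field. lra. }
  assert (Ei : inner xs y = dual y y).
  { unfold xs. rewrite inner_add_l. unfold v.
    rewrite (hf_lin_comb_l HS (H_inner H) (fun z => inner y z) Z y : inner _ y = _).
    unfold w. rewrite inner_scal_l, (inner_perp_part_l y y). unfold dual. C_ring. }
  set (b := fun k => inner xs (f k)).
  assert (Eb : inner y xs = std_form M a b).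
  { unfold y. rewrite inner_synth_l. simpl. apply Csum_ext. intros k Hk. unfold b.
    rewrite (inner_conj_sym H xs (f k)). auto. }
  assert (Hcs : Cmod2 (inner xs y) <= Cre (std_form M a a) * Cre (sf xs xs)).
  { rewrite (inner_conj_sym H y xs), Cmod2_conj, Eb.
    eapply Rle_trans; [apply (hf_cauchy_schwarz Cseq (std_form M) a b)|].
    apply Rmult_le_compat_l; [apply (hf_pos (std_form M))|].
    rewrite std_form_self. apply fterm_partial_sum_le_sf. }
  rewrite Ei, Es in Hcs. unfold dual_gram. fold y.
  pose proof (dual_pos y). pose proof (hf_self_im HS dual_form y) as Hi.
  change (Cim (dual y y) = 0) in Hi.
  pose proof (hf_pos (std_form M) a).
  unfold Cmod2 in Hcs. rewrite Hi in Hcs.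
  set (ph := Cre (dual y y)) in *. set (sa := Cre (std_form M a a)) in *.
  destruct (Req_dec ph 0); [lra|]. nra.
Qed.

Definition defect_form (M : nat) : HForm Cseq :=
  form_diff Cseq (std_form M) (dual_gram_form M) (dual_gram_le_std M).

Lemma defect_self M a : Cre (defect_form M a a) = Cre (std_form M a a) - Cre (dual_gram M a a).
Proof. simpl. ring. Qed.

(* [0 <= G <= I] forces [G^2 <= G] for [G = T* S^-1 T]; here stated for [D = I - G]. *)
Lemma defect_sq_le M a :
  sum_f_R0 (fun n => Cmod2 (defect_form M (unit_vec n) a)) M <= Cre (defect_form M a a).
Proof.
  set (Ga := fun k => dual_gram M a (unit_vec k)).
  assert (EGa : forall k, (k <= M)%nat -> Cconj (Ga k) = dual (f k) (synth M a)).
  { intros k Hk. unfold Ga, dual_gram. rewrite dual_sym, Cconj_involutive. apply dual_synth_unit; auto. }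
  assert (ED : forall n, (n <= M)%nat ->
            defect_form M (unit_vec n) a = Cconj (Cadd (a n) (Copp (Ga n)))).
  { intros n Hn. simpl. change (Csum _ M) with (std_form M (unit_vec n) a).
    rewrite std_form_unit_l by auto. unfold dual_gram at 1. rewrite dual_synth_unit by auto.
    rewrite <- EGa by auto. C_ring. }
  rewrite (sum_eq _ (fun n => Cmod2 ((@csub Cseq a Ga) n)))
    by (intros n Hn; rewrite ED by auto; rewrite Cmod2_conj; unfold Cmod2; simpl; ring).
  rewrite <- std_form_self, defect_self.
  unfold csub. rewrite (hf_expand Cseq (std_form M) a Ga Cneg1).
  assert (Eab : std_form M a Ga = dual_gram M a a).
  { simpl. unfold dual_gram. rewrite dual_synth_l. apply Csum_ext. intros k Hk. rewrite EGa; auto. }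
  assert (EGaGa : dual_gram M a Ga = Cconj (std_form M Ga Ga)).
  { unfold dual_gram. rewrite dual_sym. f_equal. rewrite dual_synth_l.
    simpl. apply Csum_ext. intros k Hk. rewrite EGa; auto. }
  set (sg := Cre (std_form M Ga Ga)). set (g := Cre (dual_gram M a a)).
  assert (Hsg : 0 <= sg) by apply (hf_pos (std_form M)).
  assert (Hg : 0 <= g) by apply (hf_pos (dual_gram_form M)).
  assert (Hcs : Cmod2 (dual_gram M a Ga) <= g * Cre (dual_gram M Ga Ga))
    by exact (hf_cauchy_schwarz Cseq (dual_gram_form M) a Ga).
  pose proof (dual_gram_le_std M Ga) as HGa. fold sg in HGa.
  pose proof (Cre_sq_le_Cmod2 (dual_gram M a Ga)) as Hr.
  replace (Cre (dual_gram M a Ga)) with sg in Hr by (rewrite EGaGa; reflexivity).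
  assert (sg <= g).
  { destruct (Req_dec sg 0); [lra|].
    assert (sg * sg <= g * sg) by (eapply Rle_trans; [exact Hr|]; eapply Rle_trans; [exact Hcs|];
                                   apply Rmult_le_compat_l; lra).
    nra. }
  rewrite Eab. fold g. unfold Cmod2; simpl. lra.
Qed.

Lemma Cmod2_add_le_weighted B0 u v w r s z : 0 < B0 ->
  0 <= w -> 0 <= r -> 0 <= s -> 0 <= z -> Cmod2 u <= w * r -> Cmod2 v <= s * z ->
  Cmod2 (Cadd u v) <= (s + B0 * w) * (/ B0 * r + z).
Proof.
  intros HB Hw Hr Hs Hz Hu Hv.
  assert (Tu : Cabs u <= sqrt w * sqrt r).
  { unfold Cabs. rewrite <- sqrt_mult by auto. apply sqrt_le_1; auto. apply Cmod2_ge0. nra. }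
  assert (Tv : Cabs v <= sqrt s * sqrt z).
  { unfold Cabs. rewrite <- sqrt_mult by auto. apply sqrt_le_1; auto. apply Cmod2_ge0. nra. }
  pose proof (Cabs_add_le u v). pose proof (Cabs_ge0 (Cadd u v)).
  set (p := sqrt w * sqrt r + sqrt s * sqrt z).
  assert (Hp : Cabs (Cadd u v) <= p) by (unfold p; lra).
  rewrite <- Cabs_sq. eapply Rle_trans; [apply Rmult_le_compat; eauto|].
  (* weighted Cauchy–Schwarz for [(sqrt w, sqrt s)] against [(sqrt r, sqrt z)] *)
  rewrite <- (sqrt_sqrt w), <- (sqrt_sqrt r), <- (sqrt_sqrt s), <- (sqrt_sqrt z) by auto.
  unfold p. set (a := sqrt w). set (b := sqrt r). set (c := sqrt s). set (d := sqrt z).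
  assert (E : (c * c + B0 * (a * a)) * (/ B0 * (b * b) + d * d) - (a * b + c * d) * (a * b + c * d) =
              (B0 * a * d - c * b) * (B0 * a * d - c * b) * / B0) by (field; lra).
  assert (0 <= (B0 * a * d - c * b) * (B0 * a * d - c * b) * / B0)
    by (apply Rmult_le_pos; [apply Rle_0_sqr | left; apply Rinv_0_lt_compat; lra]).
  lra.
Qed.

Lemma inner_sq_le_sf_dual x y : Cmod2 (inner x y) <= Cre (sf x x) * Cre (dual y y).
Proof.
  set (xV := span_part x). set (xW := perp_part x).
  assert (Ex : inner x y = Cadd (inner xW (perp_part y)) (inner xV y)).
  { rewrite (perp_span_decomp x) at 1. rewrite inner_add_l, (inner_perp_part_l x y). reflexivity. }
  assert (Esx : Cre (sf x x) = Cre (sf xV xV) + B * Cre (inner xW xW)).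
  { rewrite (perp_span_decomp x) at 1 2. fold xW xV. rewrite (vadd_comm H xW xV).
    apply sf_span_perp; [apply span_part_span | apply perp_part_perp]. }
  assert (HxV : span HS Z xV) by (apply (span_trans HS l); [apply span_part_span | auto]).
  set (c := lin_comb HS (fun z => sf xV z) Z).
  assert (Ec : xV = c) by exact (proj_of_span HS frame_form Z xV HZ_on HxV).
  assert (EV : inner xV y = Clsum (fun z => Cmul (sf xV z) (inner z y)) Z).
  { rewrite Ec at 1. exact (hf_lin_comb_l HS (H_inner H) (fun z => sf xV z) Z y). }
  assert (Esv : Cre (sf xV xV) = Rlsum (fun z => Cmod2 (sf xV z)) Z).
  { transitivity (Cre (sf c c)); [rewrite <- Ec; reflexivity|].
    exact (f_equal Cre (hf_lin_comb_self HS frame_form (fun z => sf xV z) Z HZ_on)). }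
  assert (EZ : Rlsum (fun z => Cmod2 (inner z y)) Z = Rlsum (fun z => Cmod2 (inner y z)) Z).
  { apply Rlsum_ext. intros z _. rewrite (inner_conj_sym H z y), Cmod2_conj. reflexivity. }
  rewrite Ex, dual_self, Esx. apply Cmod2_add_le_weighted.
  - apply B_pos.
  - apply inner_pos.
  - apply inner_pos.
  - apply sf_pos.
  - apply Rlsum_ge0. intros; apply Cmod2_ge0.
  - apply inner_cauchy_schwarz.
  - rewrite EV, Esv, <- EZ. apply Clsum_cauchy_schwarz.
Qed.

(** * Deletable subfamilies *)

Definition memb (F : list nat) (n : nat) : bool := existsb (Nat.eqb n) F.

Lemma memb_In F n : memb F n = true <-> In n F.
Proof.
  unfold memb. rewrite existsb_exists. split.
  - intros [m [Hm E]]. apply Nat.eqb_eq in E. subst. auto.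
  - intros Hn. exists n. split; auto. apply Nat.eqb_refl.
Qed.

Lemma restrict_span_units F (g : nat -> C) : NoDup F ->
  span Cseq (map unit_vec F) (fun k => if memb F k then g k else C0).
Proof.
  induction F as [|n F IH]; intros ND; simpl.
  - apply functional_extensionality. intros k. reflexivity.
  - inversion ND as [|? ? HnF ND']; subst.
    exists (g n), (fun k => if memb F k then g k else C0). split; auto.
    apply functional_extensionality. intros k. simpl. unfold unit_vec.
    destruct (Nat.eqb_spec k n) as [->|Hne]; simpl.
    + assert (memb F n = false) as -> by (destruct (memb F n) eqn:E; auto; apply memb_In in E; tauto).
      C_ring.
    + destruct (memb F k); C_ring.
Qed.

Lemma restricted_sum_stable F M x N : (forall n, In n F -> (n <= M)%nat) -> (N >= M)%nat ->
  sum_f_R0 (fun k => if memb F k then fterm x k else 0) N =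
  sum_f_R0 (fun k => if memb F k then fterm x k else 0) M.
Proof.
  intros HF HN. induction HN as [|N HN IH]; auto.
  rewrite tech5, IH. destruct (memb F (S N)) eqn:E; [|ring]. apply memb_In, HF in E. lia.
Qed.

Lemma deletion_bound_real s Q D c : 0 <= s -> 0 <= Q -> 0 <= D -> 0 <= c ->
  Q * Q <= s * (Q - D) -> Q <= c * D -> s / (c + 1) <= s - Q.
Proof.
  intros Hs HQ HD Hc HQQ HQD.
  apply (Rmult_le_reg_r (c + 1)); [lra|]. unfold Rdiv. rewrite Rmult_assoc, Rinv_l, Rmult_1_r by lra.
  destruct (Req_dec Q 0) as [E|E]; [rewrite E; nra|].
  assert (Q <= (c + 1) * D) by nra.
  assert ((c + 1) * (Q * Q) <= Q * ((c + 1) * s - s)) by nra.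
  assert ((c + 1) * Q <= (c + 1) * s - s) by nra.
  nra.
Qed.

Definition restricted_sum (F : list nat) (M : nat) (x : H) : R :=
  sum_f_R0 (fun k => if memb F k then fterm x k else 0) M.

Lemma restricted_sum_ge0 F M x : 0 <= restricted_sum F M x.
Proof. apply cond_pos_sum. intros n; destruct (memb F n); [apply fterm_ge0 | lra]. Qed.

(* On coefficients supported in [F] the defect dominates the norm, so the mass of [<x, f_n>]
   on [F] stays a fixed fraction below [<Sx, x>]. *)
Lemma restricted_sum_le M F W x : orthonormal Cseq (defect_form M) W -> NoDup F ->
  (forall n, In n F -> span Cseq W (unit_vec n)) ->
  Cre (sf x x) / (Rlsum (fun w => Cre (std_form M w w)) W + 1) <= Cre (sf x x) - restricted_sum F M x.
Proof.
  intros HW ND HFW.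
  set (ax := fun k => if memb F k then inner x (f k) else C0).
  assert (Hax : span Cseq W ax).
  { apply (span_trans Cseq (map unit_vec F)); [apply (restrict_span_units F _ ND)|].
    intros v Hv. apply in_map_iff in Hv. destruct Hv as [n [<- Hn]]. auto. }
  pose proof (hf_le_on_span Cseq (std_form M) (defect_form M) W ax HW Hax) as Hdom.
  set (Q := restricted_sum F M x).
  assert (EQ : Cre (std_form M ax ax) = Q).
  { rewrite std_form_self. apply sum_eq. intros k Hk. unfold ax. destruct (memb F k); auto.
    unfold Cmod2; simpl; ring. }
  assert (Ere : Cre (inner x (synth M ax)) = Q).
  { rewrite (inner_conj_sym H (synth M ax) x), inner_synth_l. simpl. apply sum_eq. intros k Hk.
    unfold ax. destruct (memb F k); simpl; [|ring].
    rewrite (inner_conj_sym H x (f k)). unfold fterm, Cmod2; simpl. ring. }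
  pose proof (inner_sq_le_sf_dual x (synth M ax)) as Hcs.
  pose proof (Cre_sq_le_Cmod2 (inner x (synth M ax))) as Hr. rewrite Ere in Hr.
  change (dual (synth M ax) (synth M ax)) with (dual_gram M ax ax) in Hcs.
  pose proof (hf_pos (defect_form M) ax) as HD.
  rewrite defect_self, EQ in Hdom, HD.
  apply (deletion_bound_real _ Q (Q - Cre (dual_gram M ax ax))); auto.
  - apply sf_pos.
  - apply restricted_sum_ge0.
  - apply Rlsum_ge0. intros; apply (hf_pos (std_form M)).
  - lra.
Qed.

Lemma deletable_of_defect_basis M F W : orthonormal Cseq (defect_form M) W -> NoDup F ->
  (forall n, In n F -> (n <= M)%nat) -> (forall n, In n F -> span Cseq W (unit_vec n)) ->
  deletable H f (memb F).
Proof.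
  intros HW ND HFM HFW.
  set (c := Rlsum (fun w => Cre (std_form M w w)) W).
  assert (Hc : 0 <= c) by (apply Rlsum_ge0; intros; apply (hf_pos (std_form M))).
  pose proof B_pos as HB.
  exists (A / (c + 1)), B. split; [apply Rdiv_lt_0_compat; lra|]. split; auto. intro x.
  pose proof (restricted_sum_le M F W x HW ND HFW) as Hkey. fold c in Hkey.
  pose proof (restricted_sum_ge0 F M x).
  pose proof (sf_bounds x) as [Hs1 Hs2]. rewrite vnorm_sq.
  exists (Cre (sf x x) - restricted_sum F M x). split; [|split; [|lra]].
  - change (Un_cv (sum_f_R0 (frame_terms H (fun n => negb (memb F n)) f x))
                  (Cre (sf x x) - restricted_sum F M x)).
    apply (Un_cv_tail (fun N => sum_f_R0 (fterm x) N - restricted_sum F M x) _ _ M).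
    + intros N HN. unfold restricted_sum. rewrite <- (restricted_sum_stable F M x N HFM HN), <- minus_sum.
      apply sum_eq. intros k _. unfold frame_terms. destruct (memb F k); simpl; unfold fterm; ring.
    + apply CV_minus; [apply sf_self_lim | apply Un_cv_const].
  - apply Rle_trans with (Cre (sf x x) / (c + 1)); auto. unfold Rdiv.
    rewrite (Rmult_comm A), Rmult_assoc, (Rmult_comm (/ (c + 1))).
    apply Rmult_le_compat_r; [left; apply Rinv_0_lt_compat; lra | lra].
Qed.

(** * Bounding the partial sums *)

Lemma defect_trace_le M W : orthonormal Cseq (defect_form M) W ->
  (forall n, (n <= M)%nat -> Cre (defect_form M (resid Cseq (defect_form M) W (unit_vec n))
                                      (resid Cseq (defect_form M) W (unit_vec n))) = 0) ->
  sum_f_R0 (fun n => Cre (defect_form M (unit_vec n) (unit_vec n))) M <= INR (length W).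
Proof.
  intros HW Hnull.
  rewrite (sum_eq _ (fun n => Rlsum (fun w => Cmod2 (defect_form M (unit_vec n) w)) W)).
  - rewrite sum_Rlsum_swap, <- (orthonormal_trace Cseq (defect_form M) W HW).
    apply Rlsum_le. intro w. apply defect_sq_le.
  - intros n Hn. pose proof (hf_resid_self Cseq (defect_form M) W (unit_vec n) HW) as Bessel.
    rewrite Hnull in Bessel by auto. lra.
Qed.

Lemma defect_diag_ge M n : (n <= M)%nat ->
  1 - / B * Cre (inner (f n) (f n)) - Rlsum (fun z => fterm z n) Z
    <= Cre (defect_form M (unit_vec n) (unit_vec n)).
Proof.
  intros Hn. rewrite defect_self, std_form_unit_l by auto.
  replace (Cre (Cconj (unit_vec n n))) with 1 by (unfold unit_vec; rewrite Nat.eqb_refl; reflexivity).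
  unfold dual_gram. rewrite dual_synth_unit, dual_sym, dual_synth_unit by auto.
  change (Cre (Cconj (dual (f n) (f n)))) with (Cre (dual (f n) (f n))). rewrite dual_self.
  assert (Rlsum (fun z => Cmod2 (inner (f n) z)) Z = Rlsum (fun z => fterm z n) Z).
  { apply Rlsum_ext. intros z _. unfold fterm. rewrite (inner_conj_sym H z (f n)), Cmod2_conj. auto. }
  pose proof (perp_part_norm_le (f n)). pose proof B_pos.
  assert (/ B * Cre (inner (perp_part (f n)) (perp_part (f n))) <= / B * Cre (inner (f n) (f n)))
    by (apply Rmult_le_compat_l; auto; left; apply Rinv_0_lt_compat; auto).
  lra.
Qed.

Lemma Z_fterm_sum_le M : sum_f_R0 (fun n => Rlsum (fun z => fterm z n) Z) M <= INR (length Z).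
Proof.
  rewrite sum_Rlsum_swap.
  eapply Rle_trans; [|right; exact (orthonormal_trace HS frame_form Z HZ_on)].
  apply Rlsum_le. intro z. apply fterm_partial_sum_le_sf.
Qed.

Lemma partial_sum_le_excess (N0 : nat) (HexN : forall S, deletable H f S -> card_le S N0) M :
  sum_f_R0 (fun n => B - vnorm H (f n) ^ 2) M <= B * (INR N0 + INR (length Z)).
Proof.
  destruct (gram_schmidt Cseq (defect_form M) unit_vec (seq 0 (S M)) (seq_NoDup (S M) 0))
    as [W [F [HW [Hlen [HF [Hinc [_ [Hnull HFW]]]]]]]].
  assert (HFM : forall n, In n F -> (n <= M)%nat) by (intros n Hn; apply Hinc, in_seq in Hn; lia).
  assert (HFspan : forall n, In n F -> span Cseq W (unit_vec n)).
  { intros n Hn. rewrite (HFW n Hn). apply span_lin_comb. intros; apply span_in; auto. }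
  pose proof (HexN _ (deletable_of_defect_basis M F W HW HF HFM HFspan) F HF
                (fun n Hn => proj2 (memb_In F n) Hn)) as HcardF.
  apply le_INR in HcardF. rewrite <- Hlen in HcardF.
  pose proof (defect_trace_le M W HW (fun n Hn => Hnull n ltac:(apply in_seq; lia))) as Htrace.
  pose proof (sum_Rle _ _ M (defect_diag_ge M)) as Hdiag.
  rewrite !minus_sum in Hdiag. pose proof (Z_fterm_sum_le M) as HZ. pose proof B_pos.
  rewrite (sum_eq _ (fun n => (1 - / B * Cre (inner (f n) (f n))) * B))
    by (intros; rewrite vnorm_sq; field; lra).
  rewrite <- scal_sum, minus_sum. apply Rmult_le_compat_l; lra.
Qed.

End Bases.

Lemma partial_sums_bounded (N0 : nat) (HexN : forall S, deletable H f S -> card_le S N0) :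
  exists K, forall M, sum_f_R0 (fun n => B - vnorm H (f n) ^ 2) M <= K.
Proof.
  destruct (orthonormal_basis_of_span HS (H_inner H) l) as [U [HU [HUl HlU]]].
  { intros x _ E. exact (inner_self_eq0 x E). }
  destruct (orthonormal_basis_of_span HS frame_form l) as [Z [HZ [HZl HlZ]]].
  { intros x _ E. exact (frame_form_definite x E). }
  exists (B * (INR N0 + INR (length Z))).
  exact (partial_sum_le_excess U Z HU HUl HlU HZ HZl HlZ N0 HexN).
Qed.

End Frame.

Theorem proposition3p6 (H : CHilbert) (f : nat -> H) (B : R) :
  separable H -> infinite_dimensional H ->
  is_frame H f ->
  optimal_upper_frame_bound H f B ->
  finite_excess H f ->
  finite_dim_range_BI_minus_frame_op H f B ->
  exists s, infinite_sum (fun n => B - vnorm H (f n) ^ 2) s.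
Proof.
  intros _ _ [A [B' [HA [_ Hframe]]]] Hopt [N0 Hexcess] [l Hl].
  assert (Hlower : forall x, exists s, infinite_sum (frame_terms H (fun _ => true) f x) s /\
                                   A * vnorm H x ^ 2 <= s).
  { intros x. destruct (Hframe x) as [s [Hs [Hge _]]]. exists s; auto. }
  destruct (partial_sums_bounded H f A B HA Hlower Hopt l Hl N0 Hexcess) as [K HK].
  apply (nonneg_series_bounded_cv _ K); [|exact HK]. intro n.
  pose proof (frame_vector_norm_le H f A B HA Hlower Hopt n). lra.
Qed.
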